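(* Let $f:\mathbb{R}^{3}\to\mathbb{R}$ be normal. Then for all $x,y,z\in\mathbb{R}$ and $k_{1},k_{2},k_{3}\neq0$: (a) the limits $A(k_{1},y,z)=\lim_{r\to\infty}\int_{-r}^{r}f(x,y,z)e^{-ik_{1}x}dx$, $B(x,k_{2},z)=\lim_{r\to\infty}\int_{-r}^{r}f(x,y,z)e^{-ik_{2}y}dy$, $C(x,y,k_{3})=\lim_{r\to\infty}\int_{-r}^{r}f(x,y,z)e^{-ik_{3}z}dz$ all exist, and $(y,z)\mapsto A(k_{1},y,z)$, $(x,z)\mapsto B(x,k_{2},z)$, $(x,y)\mapsto C(x,y,k_{3})$ are of moderate decrease $3$ (bounded by a constant times $|(\cdot,\cdot)|^{-3}$ for $|(\cdot,\cdot)|>1$); (b) the limits $F(k_{1},k_{2},z)=\lim_{r,s\to\infty}\int_{-r}^{r}\int_{-s}^{s}f(x,y,z)e^{-ik_{1}x}e^{-ik_{2}y}dxdy$, $G(k_{1},y,k_{3})=\lim_{r,s\to\infty}\int_{-r}^{r}\int_{-s}^{s}f(x,y,z)e^{-ik_{1}x}e^{-ik_{3}z}dxdz$, $H(x,k_{2},k_{3})=\lim_{r,s\to\infty}\int_{-r}^{r}\int_{-s}^{s}f(x,y,z)e^{-ik_{2}y}e^{-ik_{3}z}dydz$ all exist, and $z\mapsto F(k_{1},k_{2},z)$, $y\mapsto G(k_{1},y,k_{3})$, $x\mapsto H(x,k_{2},k_{3})$ are of moderate decrease (bounded by a constant times the inverse square of the variable for its absolute value $>1$); (c) $F(k_{1},k_{2},z)=\int_{-\infty}^{\infty}A(k_{1},y,z)e^{-ik_{2}y}dy$,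 and the corresponding identities hold for the other functions obtained by integrating out variables in the same way, namely $F(k_{1},k_{2},z)=\int_{-\infty}^{\infty}B(x,k_{2},z)e^{-ik_{1}x}dx$, $G(k_{1},y,k_{3})=\int_{-\infty}^{\infty}A(k_{1},y,z)e^{-ik_{3}z}dz=\int_{-\infty}^{\infty}C(x,y,k_{3})e^{-ik_{1}x}dx$, $H(x,k_{2},k_{3})=\int_{-\infty}^{\infty}B(x,k_{2},z)e^{-ik_{3}z}dz=\int_{-\infty}^{\infty}C(x,y,k_{3})e^{-ik_{2}y}dy$.
   Context: One-variable: a smooth $g:\mathbb{R}\setminus V\to\mathbb{R}$, $V$ bounded closed, is analytic at infinity if there exist $\epsilon_{1},\epsilon_{2}>0$ with $g(1/t)=\sum_{n\geq1}a_{n}t^{n}$ on $(0,\epsilon_{1})$ and $g(1/t)=\sum_{n\geq1}b_{n}t^{n}$ on $(-\epsilon_{2},0)$, real coefficients, both series absolutely convergent there. A one-variable function is of moderate decrease if $|g(t)|\leq C/t^{2}$ for $|t|>1$. Two variables: for smooth $h:\mathbb{R}^{2}\setminus W\to\mathbb{R}$, $W$ closed bounded: very moderate decrease means $|h(u,v)|\leq C/|(u,v)|$ for $|(u,v)|>1$; moderate decrease $n$ means $|h|\leq C/|(u,v)|^{n}$ for $|(u,v)|>1$ (moderate decrease means $n=2$). With fibres $h_{u}(v)=h(u,v)$, $h_{v}(u)=h(u,v)$, $h$ is normal if (i) every $h_{u}$ is analytic at infinity; (ii) every $h_{v}$ is analytic at infinity; (iii) $h$ is of very moderate decrease; (iv)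 $\partial h/\partial u$, $\partial h/\partial v$ are of moderate decrease; (v) there is a uniform bound on the number of zeros of $h_{u},(h_{u})',(h_{u})'',h_{v},(h_{v})',(h_{v})''$. Three variables: smooth $f:\mathbb{R}^{3}\to\mathbb{R}$ is of very moderate decrease if $|f(x,y,z)|\leq C/|(x,y,z)|$ for $|(x,y,z)|>1$, of moderate decrease $n$ ($n\geq2$) if $|f|\leq C/|(x,y,z)|^{n}$ there. Fibres: $f_{x}(y,z)=f(x,y,z)$ etc., and $f_{x,y}(z)=f(x,y,z)$, $f_{x,z}(y)$, $f_{y,z}(x)$ similarly, with derivatives in the free variable. $f$ is normal if: (i) for every $x$, $f_{x}(y,z)$ is normal; (ii) for every $y$, $f_{y}(x,z)$ is normal; (iii) for every $z$, $f_{z}(x,y)$ is normal; (iv) $f$ is of very moderate decrease; (v) for $i+j+k\geq1$, $\frac{\partial^{i+j+k}f}{\partial x^{i}\partial y^{j}\partial z^{k}}$ is of moderate decrease $i+j+k+1$; (vi) there is a uniform bound on the number of zeros of $f_{x,y}$ and its first four derivatives, and similarly for $f_{x,z}$, $f_{y,z}$. *)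

From Stdlib Require Import Reals List.
From Coquelicot Require Import Coquelicot.
Open Scope R_scope.

Definition norm2 (u v : R) : R := sqrt (u ^ 2 + v ^ 2).
Definition norm3 (x y z : R) : R := sqrt (x ^ 2 + y ^ 2 + z ^ 2).

Inductive dir3 := dX | dY | dZ.
Inductive dir2 := dU | dV.

Definition pd3 (d : dir3) (g : R -> R -> R -> R) : R -> R -> R -> R :=
  match d with
  | dX => fun x y z => Derive (fun t => g t y z) x
  | dY => fun x y z => Derive (fun t => g x t z) y
  | dZ => fun x y z => Derive (fun t => g x y t) z
  end.
Definition ex_pd3 (d : dir3) (g : R -> R -> R -> R) (x y z : R) : Prop :=
  match d with
  | dX => ex_derive (fun t => g t y z) x
  | dY => ex_derive (fun t => g x t z) y
  | dZ => ex_derive (fun t => g x y t) z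
  end.
Definition pdl3 (l : list dir3) (g : R -> R -> R -> R) : R -> R -> R -> R :=
  fold_right pd3 g l.

Definition pd2 (d : dir2) (h : R -> R -> R) : R -> R -> R :=
  match d with
  | dU => fun u v => Derive (fun t => h t v) u
  | dV => fun u v => Derive (fun t => h u t) v
  end.
Definition ex_pd2 (d : dir2) (h : R -> R -> R) (u v : R) : Prop :=
  match d with
  | dU => ex_derive (fun t => h t v) u
  | dV => ex_derive (fun t => h u t) v
  end.
Definition pdl2 (l : list dir2) (h : R -> R -> R) : R -> R -> R :=
  fold_right pd2 h l.

Definition smooth3 (f : R -> R -> R -> R) : Prop :=
  forall l : list dir3,
    (forall d x y z, ex_pd3 d (pdl3 l f) x y z) /\
    (forall p : R * R * R,
        continuous (fun q : R * R * R => pdl3 l f (fst (fst q)) (snd (fst q)) (snd q)) p).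

Definition smooth2 (h : R -> R -> R) : Prop :=
  forall l : list dir2,
    (forall d u v, ex_pd2 d (pdl2 l h) u v) /\
    (forall p : R * R,
        continuous (fun q : R * R => pdl2 l h (fst q) (snd q)) p).

(* analytic at infinity (for a function defined on all of R, i.e. V = empty):
   g(1/t) = sum_{n>=1} a_n t^n on (0,e1), g(1/t) = sum_{n>=1} b_n t^n on (-e2,0),
   both series absolutely convergent there. *)
Definition analytic_at_infinity (g : R -> R) : Prop :=
  exists e1 e2 : R, 0 < e1 /\ 0 < e2 /\
  exists a b : nat -> R,
    (forall t, 0 < t < e1 ->
       ex_series (fun n => Rabs (a (S n) * t ^ S n)) /\
       is_series (fun n => a (S n) * t ^ S n) (g (/ t))) /\
    (forall t, - e2 < t < 0 ->
       ex_series (fun n => Rabs (b (S n) * t ^ S n)) /\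
       is_series (fun n => b (S n) * t ^ S n) (g (/ t))).

Definition moderate_decrease1 (g : R -> R) : Prop :=
  exists K : R, forall t, 1 < Rabs t -> Rabs (g t) <= K / t ^ 2.

Definition zeros_le (g : R -> R) (N : nat) : Prop :=
  forall l : list R, NoDup l -> (forall t, In t l -> g t = 0) -> (length l <= N)%nat.

Definition very_moderate_decrease2 (h : R -> R -> R) : Prop :=
  exists K : R, forall u v, 1 < norm2 u v -> Rabs (h u v) <= K / norm2 u v.
Definition moderate_decrease2 (n : nat) (h : R -> R -> R) : Prop :=
  exists K : R, forall u v, 1 < norm2 u v -> Rabs (h u v) <= K / norm2 u v ^ n.

Definition normal2 (h : R -> R -> R) : Prop :=
  smooth2 h /\
  (forall u, analytic_at_infinity (fun v => h u v)) /\
  (forall v, analytic_at_infinity (fun u => h u v)) /\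
  very_moderate_decrease2 h /\
  moderate_decrease2 2 (pd2 dU h) /\
  moderate_decrease2 2 (pd2 dV h) /\
  (exists N : nat, forall u v (n : nat), (n <= 2)%nat ->
     zeros_le (Derive_n (fun t => h u t) n) N /\
     zeros_le (Derive_n (fun t => h t v) n) N).

Definition very_moderate_decrease3 (f : R -> R -> R -> R) : Prop :=
  exists K : R, forall x y z, 1 < norm3 x y z -> Rabs (f x y z) <= K / norm3 x y z.
Definition moderate_decrease3 (n : nat) (f : R -> R -> R -> R) : Prop :=
  exists K : R, forall x y z, 1 < norm3 x y z -> Rabs (f x y z) <= K / norm3 x y z ^ n.

Definition pdijk (i j k : nat) (f : R -> R -> R -> R) : R -> R -> R -> R :=
  pdl3 (repeat dX i ++ repeat dY j ++ repeat dZ k) f.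

Definition normal3 (f : R -> R -> R -> R) : Prop :=
  smooth3 f /\
  (forall x, normal2 (fun y z => f x y z)) /\
  (forall y, normal2 (fun x z => f x y z)) /\
  (forall z, normal2 (fun x y => f x y z)) /\
  very_moderate_decrease3 f /\
  (forall i j k : nat, (1 <= i + j + k)%nat ->
     moderate_decrease3 (i + j + k + 1) (pdijk i j k f)) /\
  (exists N : nat, forall a b (n : nat), (n <= 4)%nat ->
     zeros_le (Derive_n (fun z => f a b z) n) N /\
     zeros_le (Derive_n (fun y => f a y b) n) N /\
     zeros_le (Derive_n (fun x => f x a b) n) N).

Definition CV : CompleteNormedModule R_AbsRing := C_R_CompleteNormedModule.

Definition cexpi (t : R) : C := (cos t, sin t).

Definition sym_lim (g : R -> C) (l : C) : Prop :=
  filterlim (fun r : R => @RInt CV g (- r) r) (Rbar_locally p_infty) (locally (l : CV)).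

Definition sym_lim2 (g : R -> R -> C) (l : C) : Prop :=
  filterlim (fun rs : R * R =>
      @RInt CV (fun b => @RInt CV (fun a => g a b) (- snd rs) (snd rs)) (- fst rs) (fst rs))
    (filter_prod (Rbar_locally p_infty) (Rbar_locally p_infty)) (locally (l : CV)).

Definition improper_int (g : R -> C) (l : C) : Prop :=
  @is_RInt_gen CV g (Rbar_locally m_infty) (Rbar_locally p_infty) l.

Definition moderate_decreaseC1 (g : R -> C) : Prop :=
  exists K : R, forall t, 1 < Rabs t -> Cmod (g t) <= K / t ^ 2.
Definition moderate_decreaseC2 (n : nat) (h : R -> R -> C) : Prop :=
  exists K : R, forall u v, 1 < norm2 u v -> Cmod (h u v) <= K / norm2 u v ^ n.

From Stdlib Require Import Reals List Lra Lia ClassicalEpsilon.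
From Coquelicot Require Import Coquelicot.
Open Scope R_scope.

(* Each one-variable transform is the oscillatory integral of a function decaying like 1/|x|:
   one integration by parts against e^{-ikx} makes the symmetric integrals Cauchy, and three
   integrations by parts bound the limit by pi K / (|k|^3 |(y,z)|^3), using that the third
   derivative decays like |(x,y,z)|^-4.  For the double transforms, the same three integrations
   by parts show that the tail of the inner integral, integrated against e^{-i k' y} over any
   [-r, r], is O(1/s) uniformly in r; hence the integrals over [-r, r] x [-s, s] converge jointly
   to the improper integral of the one-variable transform, and Fubini on rectangles shows that
   both orders of integration give the same limit.  The decay hypotheses used are invariant under
   permutations of the variables, so a single ordering of the variables suffices. *)

(** * Complex-valued integrals of modulated functions *)

Definition wave (k x : R) : C := cexpi (- (k * x)).

Definition modulated (phi : R -> R) (k x : R) : C := Cmult (RtoC (phi x)) (wave k x).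

(* [ibp_factor k = i / k = 1 / (-i k)] inverts the factor [-i k] produced by
   differentiating [wave k]. *)
Definition ibp_factor (k : R) : C := (0, / k).

Lemma scal_CV (r : R) (u : C) : @scal R_Ring CV r u = Cmult (RtoC r) u.
Proof.
  destruct u as [a b].
  change (@scal R_Ring CV r (a, b)) with ((r * a, r * b) : C).
  unfold Cmult, RtoC. apply injective_projections; simpl; ring.
Qed.

Lemma norm_CV (u : CV) : norm u = Cmod u.
Proof. rewrite Cmod_norm. reflexivity. Qed.

Lemma minus_CV (u v : CV) : minus u v = Cminus u v.
Proof. destruct u, v. reflexivity. Qed.

Lemma plus_CV (u v : CV) : plus u v = Cplus u v.
Proof. destruct u, v. reflexivity. Qed.

Lemma opp_CV (u : CV) : opp u = Copp u.
Proof. destruct u. reflexivity. Qed.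

Lemma Cmod_wave k x : Cmod (wave k x) = 1.
Proof.
  unfold wave, cexpi, Cmod; simpl.
  pose proof (sin2_cos2 (- (k * x))) as H. unfold Rsqr in H.
  rewrite !Rmult_1_r, Rplus_comm, H. apply sqrt_1.
Qed.

Lemma Cmod_ibp_factor k : k <> 0 -> Cmod (ibp_factor k) = / Rabs k.
Proof.
  intro Hk. unfold ibp_factor, Cmod; simpl.
  replace (0 * (0 * 1) + / k * (/ k * 1)) with (Rsqr (/ k)) by (unfold Rsqr; ring).
  rewrite sqrt_Rsqr_abs. apply Rabs_inv.
Qed.

Lemma Cmod_modulated phi k x : Cmod (modulated phi k x) = Rabs (phi x).
Proof. unfold modulated. rewrite Cmod_mult, Cmod_wave, Cmod_R. ring. Qed.

Lemma Cmod_Cminus_le (a b : C) : Cmod (Cminus a b) <= Cmod a + Cmod b.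
Proof. unfold Cminus. rewrite <- (Cmod_opp b). apply Cmod_triangle. Qed.

Lemma Cmod_Cminus_sym (a b : C) : Cmod (Cminus a b) = Cmod (Cminus b a).
Proof. replace (Cminus a b) with (Copp (Cminus b a)) by ring. apply Cmod_opp. Qed.

Lemma continuous_C_pair (h : R -> C) x :
  continuous (fun t => fst (h t)) x -> continuous (fun t => snd (h t)) x ->
  @continuous R_UniformSpace CV h x.
Proof.
  intros H1 H2. apply filterlim_locally. intro eps.
  apply filterlim_locally with (eps := eps) in H1.
  apply filterlim_locally with (eps := eps) in H2.
  eapply filter_imp; [|exact (filter_and _ _ H1 H2)]. intros t [h1 h2]. split; auto.
Qed.

Lemma continuous_C_fst (h : R -> C) x :
  @continuous R_UniformSpace CV h x -> continuous (fun t => fst (h t)) x.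
Proof.
  intro H. apply filterlim_locally. intro eps. apply filterlim_locally with (eps := eps) in H.
  eapply filter_imp; [|exact H]. intros t [h1 _]. exact h1.
Qed.

Lemma continuous_C_snd (h : R -> C) x :
  @continuous R_UniformSpace CV h x -> continuous (fun t => snd (h t)) x.
Proof.
  intro H. apply filterlim_locally. intro eps. apply filterlim_locally with (eps := eps) in H.
  eapply filter_imp; [|exact H]. intros t [_ h2]. exact h2.
Qed.

Lemma continuous_Cmult (h1 h2 : R -> C) x :
  @continuous R_UniformSpace CV h1 x -> @continuous R_UniformSpace CV h2 x ->
  @continuous R_UniformSpace CV (fun t => Cmult (h1 t) (h2 t)) x.
Proof.
  intros H1 H2.
  pose proof (continuous_C_fst _ _ H1). pose proof (continuous_C_snd _ _ H1).
  pose proof (continuous_C_fst _ _ H2). pose proof (continuous_C_snd _ _ H2).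
  apply continuous_C_pair; simpl.
  - apply (@continuous_minus R_UniformSpace R_AbsRing R_NormedModule
      (fun t => fst (h1 t) * fst (h2 t)) (fun t => snd (h1 t) * snd (h2 t)));
      apply (@continuous_mult R_UniformSpace R_AbsRing (fun t => _ (h1 t)) (fun t => _ (h2 t)));
      assumption.
  - apply (@continuous_plus R_UniformSpace R_AbsRing R_NormedModule
      (fun t => fst (h1 t) * snd (h2 t)) (fun t => snd (h1 t) * fst (h2 t)));
      apply (@continuous_mult R_UniformSpace R_AbsRing (fun t => _ (h1 t)) (fun t => _ (h2 t)));
      assumption.
Qed.

Lemma is_derive_wave k x :
  @is_derive R_AbsRing CV (wave k) x (Cmult (0, - k) (wave k x)).
Proof.
  assert (H : @is_derive R_AbsRing CV
     (fun t => plus (@scal R_Ring CV (cos (- (k * t))) (1, 0))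
                    (@scal R_Ring CV (sin (- (k * t))) (0, 1)))
     x (plus (@scal R_Ring CV (k * sin (- (k * x))) (1, 0))
             (@scal R_Ring CV (- k * cos (- (k * x))) (0, 1)))).
  { apply (@is_derive_plus R_AbsRing CV); apply (@is_derive_scal_l R_AbsRing CV);
      auto_derive; auto; ring. }
  eapply is_derive_ext; [|eapply filterdiff_ext_lin; [exact H|]];
    intro; unfold wave, cexpi; apply injective_projections; simpl;
    unfold plus, scal, mult; simpl; unfold mult; simpl; ring.
Qed.

Lemma continuous_wave k x : @continuous R_UniformSpace CV (wave k) x.
Proof. apply (@ex_derive_continuous R_AbsRing CV). eexists. apply is_derive_wave. Qed.

Lemma continuous_modulated phi k x :
  continuous phi x -> @continuous R_UniformSpace CV (modulated phi k) x.
Proof.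
  intro H. apply (continuous_ext (fun t => @scal R_Ring CV (phi t) (wave k t))).
  - intro t. apply scal_CV.
  - apply (@continuous_scal R_UniformSpace R_AbsRing CV); [exact H | apply continuous_wave].
Qed.

Lemma ex_RInt_modulated phi k u v :
  (forall x, continuous phi x) -> @ex_RInt CV (modulated phi k) u v.
Proof. intro H. apply ex_RInt_continuous. intros. apply continuous_modulated, H. Qed.

(* [ring] only recognises equalities stated at type [C], not at the module [CV]. *)
Ltac Cring := match goal with |- ?a = ?b => change (@eq C a b) end; ring.

Lemma is_RInt_C_fst (h : R -> C) a b (l : C) :
  @is_RInt CV h a b l -> is_RInt (fun x => fst (h x)) a b (fst l).
Proof. exact (@is_RInt_fct_extend_fst R_NormedModule R_NormedModule h a b l). Qed.

Lemma is_RInt_C_snd (h : R -> C) a b (l : C) :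
  @is_RInt CV h a b l -> is_RInt (fun x => snd (h x)) a b (snd l).
Proof. exact (@is_RInt_fct_extend_snd R_NormedModule R_NormedModule h a b l). Qed.

Lemma is_RInt_C_pair (h : R -> C) a b (l : C) :
  is_RInt (fun x => fst (h x)) a b (fst l) -> is_RInt (fun x => snd (h x)) a b (snd l) ->
  @is_RInt CV h a b l.
Proof.
  destruct l. exact (@is_RInt_fct_extend_pair R_NormedModule R_NormedModule h a b _ _).
Qed.

Lemma is_RInt_Cmult_l (h : R -> C) a b (l w : C) :
  @is_RInt CV h a b l -> @is_RInt CV (fun x => Cmult w (h x)) a b (Cmult w l).
Proof.
  intro H. pose proof (is_RInt_C_fst _ _ _ _ H) as H1. pose proof (is_RInt_C_snd _ _ _ _ H) as H2.
  destruct w as [w1 w2]. apply is_RInt_C_pair; simpl.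
  - apply (is_RInt_ext (fun x => minus (scal w1 (fst (h x))) (scal w2 (snd (h x))))).
    + intros. reflexivity.
    + apply (@is_RInt_minus R_NormedModule); apply (@is_RInt_scal R_NormedModule); assumption.
  - apply (is_RInt_ext (fun x => plus (scal w1 (snd (h x))) (scal w2 (fst (h x))))).
    + intros. reflexivity.
    + apply (@is_RInt_plus R_NormedModule); apply (@is_RInt_scal R_NormedModule); assumption.
Qed.

Lemma is_RInt_Cmult_r (h : R -> C) a b (l w : C) :
  @is_RInt CV h a b l -> @is_RInt CV (fun x => Cmult (h x) w) a b (Cmult l w).
Proof.
  intro H. apply (is_RInt_ext (fun x => Cmult w (h x))); [intros; apply Cmult_comm|].
  rewrite Cmult_comm. apply is_RInt_Cmult_l, H.
Qed.

Lemma is_RInt_Cplus (h1 h2 : R -> C) a b l1 l2 :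
  @is_RInt CV h1 a b l1 -> @is_RInt CV h2 a b l2 ->
  @is_RInt CV (fun x => Cplus (h1 x) (h2 x)) a b (Cplus l1 l2).
Proof.
  intros H1 H2. rewrite <- plus_CV.
  eapply is_RInt_ext; [|exact (@is_RInt_plus CV h1 h2 a b l1 l2 H1 H2)].
  intros. apply plus_CV.
Qed.

Lemma is_RInt_Cminus (h1 h2 : R -> C) a b l1 l2 :
  @is_RInt CV h1 a b l1 -> @is_RInt CV h2 a b l2 ->
  @is_RInt CV (fun x => Cminus (h1 x) (h2 x)) a b (Cminus l1 l2).
Proof.
  intros H1 H2. rewrite <- minus_CV.
  eapply is_RInt_ext; [|exact (@is_RInt_minus CV h1 h2 a b l1 l2 H1 H2)].
  intros. apply minus_CV.
Qed.

Lemma RInt_Chasles_C (h : R -> C) a b c :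
  @ex_RInt CV h a b -> @ex_RInt CV h b c ->
  Cplus (@RInt CV h a b) (@RInt CV h b c) = @RInt CV h a c.
Proof. intros H1 H2. rewrite <- (@RInt_Chasles CV h a b c H1 H2). symmetry. apply plus_CV. Qed.

Lemma Cmod_RInt_swap (h : R -> C) a b :
  @ex_RInt CV h a b -> Cmod (@RInt CV h b a) = Cmod (@RInt CV h a b).
Proof. intro H. rewrite <- (@opp_RInt_swap CV h a b H), opp_CV. apply Cmod_opp. Qed.

Lemma continuous_of_is_derive (phi dphi : R -> R) :
  (forall x, is_derive phi x (dphi x)) -> forall x, continuous phi x.
Proof. intros H x. apply (@ex_derive_continuous R_AbsRing R_NormedModule). eexists. apply H. Qed.

Lemma RInt_modulated_by_parts (phi dphi : R -> R) (k u v : R) : k <> 0 ->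
  (forall x, is_derive phi x (dphi x)) -> (forall x, continuous dphi x) ->
  @RInt CV (modulated phi k) u v =
    Cmult (ibp_factor k)
      (Cminus (Cminus (modulated phi k v) (modulated phi k u)) (@RInt CV (modulated dphi k) u v)).
Proof.
  intros Hk Hd Hc. apply is_RInt_unique.
  assert (Hdphi : @is_RInt CV (fun t => @scal R_Ring CV (dphi t) (wave k t)) u v
                    (@RInt CV (modulated dphi k) u v)).
  { apply (is_RInt_ext (modulated dphi k)); [intros; symmetry; apply scal_CV|].
    apply (@RInt_correct CV), ex_RInt_modulated, Hc. }
  assert (Hwave' : forall t, @continuous R_UniformSpace CV (fun t => Cmult (0, - k) (wave k t)) t).
  { intro t. apply continuous_Cmult; [apply continuous_const | apply continuous_wave]. }
  pose proof (@is_RInt_scal_derive_r CV phi (wave k) dphi (fun t => Cmult (0, - k) (wave k t))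
     u v _ (fun t _ => Hd t) (fun t _ => is_derive_wave k t) (fun t _ => Hc t)
     (fun t _ => Hwave' t) Hdphi) as H.
  apply (is_RInt_Cmult_l _ _ _ _ (ibp_factor k)) in H.
  rewrite !scal_CV, !minus_CV in H.
  eapply is_RInt_ext; [|exact H].
  intros x _. cbv beta. rewrite scal_CV. unfold modulated, ibp_factor, RtoC.
  destruct (wave k x) as [e1 e2]. unfold Cmult. simpl.
  apply injective_projections; simpl; field; exact Hk.
Qed.

Definition ibp3_boundary (p0 p1 p2 : R -> R) (k x : R) : C :=
  Cmult (ibp_factor k) (Cminus (modulated p0 k x)
    (Cmult (ibp_factor k) (Cminus (modulated p1 k x) (Cmult (ibp_factor k) (modulated p2 k x))))).

Definition ibp_factor3 (k : R) : C := Cmult (ibp_factor k) (Cmult (ibp_factor k) (ibp_factor k)).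

Lemma RInt_modulated_by_parts3 (p0 p1 p2 p3 : R -> R) (k u v : R) : k <> 0 ->
  (forall x, is_derive p0 x (p1 x)) -> (forall x, is_derive p1 x (p2 x)) ->
  (forall x, is_derive p2 x (p3 x)) -> (forall x, continuous p3 x) ->
  @RInt CV (modulated p0 k) u v =
    Cminus (Cminus (ibp3_boundary p0 p1 p2 k v) (ibp3_boundary p0 p1 p2 k u))
      (Cmult (ibp_factor3 k) (@RInt CV (modulated p3 k) u v)).
Proof.
  intros Hk D0 D1 D2 C3.
  pose proof (continuous_of_is_derive _ _ D2) as C2.
  pose proof (continuous_of_is_derive _ _ D1) as C1.
  rewrite (RInt_modulated_by_parts p0 p1), (RInt_modulated_by_parts p1 p2),
    (RInt_modulated_by_parts p2 p3) by assumption.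
  unfold ibp3_boundary, ibp_factor3. Cring.
Qed.

Lemma Cmod_ibp_factor3 k : k <> 0 -> Cmod (ibp_factor3 k) = (/ Rabs k) ^ 3.
Proof.
  intro Hk. unfold ibp_factor3. rewrite !Cmod_mult, Cmod_ibp_factor by exact Hk.
  ring.
Qed.

Lemma Cmod_ibp3_boundary (p0 p1 p2 : R -> R) k x : k <> 0 ->
  Cmod (ibp3_boundary p0 p1 p2 k x) <=
    / Rabs k * Rabs (p0 x) + (/ Rabs k) ^ 2 * Rabs (p1 x) + (/ Rabs k) ^ 3 * Rabs (p2 x).
Proof.
  intro Hk. unfold ibp3_boundary.
  assert (Ha : 0 <= / Rabs k) by (apply Rlt_le, Rinv_0_lt_compat, Rabs_pos_lt, Hk).
  rewrite Cmod_mult, Cmod_ibp_factor by exact Hk.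
  eapply Rle_trans; [apply Rmult_le_compat_l; [exact Ha | apply Cmod_Cminus_le]|].
  rewrite Cmod_mult, Cmod_ibp_factor, Cmod_modulated by exact Hk.
  eapply Rle_trans; [apply Rmult_le_compat_l, Rplus_le_compat_l, Rmult_le_compat_l;
    [exact Ha | exact Ha | apply Cmod_Cminus_le]|].
  rewrite Cmod_mult, Cmod_ibp_factor, !Cmod_modulated by exact Hk.
  right. ring.
Qed.

Lemma pos_sq_plus_sq (x a : R) : 0 < a -> 0 < x ^ 2 + a ^ 2.
Proof. intro. apply Rplus_le_lt_0_compat; [apply pow2_ge_0 | apply pow_lt; assumption]. Qed.

Lemma is_RInt_Lorentz (a u v : R) : 0 < a ->
  is_RInt (fun x => / (x ^ 2 + a ^ 2)) u v ((atan (v / a) - atan (u / a)) / a).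
Proof.
  intro Ha.
  replace ((atan (v / a) - atan (u / a)) / a) with (minus (atan (v / a) / a) (atan (u / a) / a))
    by (unfold minus, plus, opp; simpl; field; lra).
  apply (is_RInt_derive (fun t => atan (t / a) / a)).
  - intros x _.
    assert (Hat : is_derive atan (x / a) (/ (1 + (x / a) ^ 2)))
      by (apply is_derive_Reals, derivable_pt_lim_atan).
    apply (is_derive_ext (fun t => / a * atan (t / a))); [intro t; unfold Rdiv; apply Rmult_comm|].
    replace (/ (x ^ 2 + a ^ 2)) with (/ a * (/ a * / (1 + (x / a) ^ 2)))
      by (assert (0 <= (x / a) ^ 2) by apply pow2_ge_0;
          pose proof (pos_sq_plus_sq x a Ha); field; repeat split; lra).
    apply (is_derive_scal (fun t => atan (t / a))).
    apply (is_derive_comp atan (fun t => t / a)); [exact Hat|].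
    auto_derive; [exact I | field; lra].
  - intros x _. apply continuous_Rinv_comp.
    + apply (@ex_derive_continuous R_AbsRing R_NormedModule (fun t => t ^ 2 + a ^ 2)).
      auto_derive. exact I.
    + apply Rgt_not_eq, pos_sq_plus_sq, Ha.
Qed.

Lemma Cmod_RInt_le_Lorentz (h : R -> C) (u v a M : R) : 0 < a -> u <= v -> 0 <= M ->
  @ex_RInt CV h u v -> (forall x, u <= x <= v -> Cmod (h x) <= M / (x ^ 2 + a ^ 2)) ->
  Cmod (@RInt CV h u v) <= M * PI / a.
Proof.
  intros Ha Huv HM Hex Hb. rewrite <- norm_CV.
  eapply Rle_trans.
  - apply (@norm_RInt_le CV h (fun x => scal M (/ (x ^ 2 + a ^ 2))) u v _
      (scal M ((atan (v / a) - atan (u / a)) / a)) Huv).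
    + intros x Hx. rewrite norm_CV. apply Hb, Hx.
    + apply (@RInt_correct CV), Hex.
    + apply (@is_RInt_scal R_NormedModule), is_RInt_Lorentz, Ha.
  - change (scal M ((atan (v / a) - atan (u / a)) / a)) with (M * ((atan (v / a) - atan (u / a)) / a)).
    unfold Rdiv. rewrite Rmult_assoc. apply Rmult_le_compat_l; [exact HM|].
    apply Rmult_le_compat_r; [apply Rlt_le, Rinv_0_lt_compat, Ha|].
    pose proof (atan_bound (v * / a)). pose proof (atan_bound (u * / a)). lra.
Qed.

Lemma is_RInt_inv_sq (u v : R) : (0 < u /\ 0 < v) \/ (u < 0 /\ v < 0) ->
  is_RInt (fun x => / x ^ 2) u v (/ u - / v).
Proof.
  intro H.
  assert (Hx : forall x, Rmin u v <= x <= Rmax u v -> x <> 0)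
    by (intros x Hx; unfold Rmin, Rmax in Hx; destruct (Rle_dec u v); lra).
  replace (/ u - / v) with (minus (- / v) (- / u)) by (unfold minus, plus, opp; simpl; ring).
  apply (is_RInt_derive (fun t => - / t)).
  - intros x Hx'. specialize (Hx x Hx'). auto_derive; [exact Hx | field; exact Hx].
  - intros x Hx'. apply continuous_Rinv_comp; [|apply pow_nonzero, Hx, Hx'].
    apply (@ex_derive_continuous R_AbsRing R_NormedModule (fun t => t ^ 2)). auto_derive. exact I.
Qed.

Lemma Cmod_RInt_le_inv_sq (h : R -> C) (u v s M : R) : 0 < s -> 0 <= M ->
  (s <= u /\ s <= v) \/ (u <= - s /\ v <= - s) -> @ex_RInt CV h u v ->
  (forall x, s <= Rabs x -> Cmod (h x) <= M / x ^ 2) -> Cmod (@RInt CV h u v) <= M / s.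
Proof.
  intros Hs HM Huv Hex Hb.
  assert (Hle : forall u v, u <= v -> (s <= u /\ s <= v) \/ (u <= - s /\ v <= - s) ->
            @ex_RInt CV h u v -> Cmod (@RInt CV h u v) <= M / s).
  { clear u v Huv Hex. intros u v Huv Huv' Hex. rewrite <- norm_CV.
    eapply Rle_trans.
    - apply (@norm_RInt_le CV h (fun x => scal M (/ x ^ 2)) u v _ (scal M (/ u - / v)) Huv).
      + intros x Hx. rewrite norm_CV. apply Hb. unfold Rabs. destruct (Rcase_abs x); lra.
      + apply (@RInt_correct CV), Hex.
      + apply (@is_RInt_scal R_NormedModule), is_RInt_inv_sq. lra.
    - change (scal M (/ u - / v)) with (M * (/ u - / v)). unfold Rdiv.
      apply Rmult_le_compat_l; [exact HM|].
      destruct Huv' as [[Hu Hv] | [Hu Hv]].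
      + assert (0 < / v) by (apply Rinv_0_lt_compat; lra).
        assert (/ u <= / s) by (apply Rinv_le_contravar; lra). lra.
      + assert (/ u < 0) by (apply Rinv_lt_0_compat; lra).
        assert (/ - v <= / s) by (apply Rinv_le_contravar; lra).
        rewrite Rinv_opp in *. lra. }
  destruct (Rle_or_lt u v) as [Huv'|Hvu].
  - apply Hle; assumption.
  - rewrite <- Cmod_RInt_swap by exact Hex.
    apply Hle; [lra | tauto | apply (@ex_RInt_swap CV), Hex].
Qed.

Lemma filterlim_locally_Cmod {T} (F : (T -> Prop) -> Prop) {FF : Filter F} (h : T -> C) (l : C) :
  filterlim h F (@locally CV l) <-> forall eps : posreal, F (fun t => Cmod (Cminus (h t) l) < eps).
Proof.
  rewrite (@filterlim_locally_ball_norm R_AbsRing _ CV F FF).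
  split; intros H eps; (eapply filter_imp; [|exact (H eps)]); intros t Ht;
    unfold ball_norm in *; rewrite norm_CV, minus_CV in *; exact Ht.
Qed.

Lemma Cmod_lim_le {T} (F : (T -> Prop) -> Prop) {FF : ProperFilter F} (h : T -> C) (l v : C) (c : R) :
  filterlim h F (@locally CV l) -> F (fun t => Cmod (Cminus (h t) v) <= c) ->
  Cmod (Cminus l v) <= c.
Proof.
  intros Hl Hb. apply Rle_plus_epsilon. intros eps Heps.
  pose proof (proj1 (filterlim_locally_Cmod F h l) Hl (mkposreal _ Heps)) as Hl'.
  destruct (filter_ex _ (filter_and _ _ Hl' Hb)) as [t [Ht1 Ht2]]. simpl in Ht1.
  replace (Cminus l v) with (Cplus (Copp (Cminus (h t) l)) (Cminus (h t) v)) by ring.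
  eapply Rle_trans; [apply Cmod_triangle|]. rewrite Cmod_opp. lra.
Qed.

Lemma Rdiv_lt_of_Rdiv_lt (A s eps : R) : 0 <= A -> 0 < eps -> 0 < s -> A / eps < s -> A / s < eps.
Proof.
  intros HA He Hs H. apply (Rmult_lt_reg_r s); [exact Hs|].
  replace (A / s * s) with A by (field; lra).
  apply (Rmult_lt_compat_r eps) in H; [|exact He].
  replace (A / eps * eps) with A in H by (field; lra). lra.
Qed.

(** * Convergence and decay of one-variable transforms *)

Definition slow_decay (phi dphi : R -> R) (R0 K : R) : Prop :=
  0 < R0 /\ 0 <= K /\ (forall x, is_derive phi x (dphi x)) /\ (forall x, continuous dphi x) /\
  (forall x, R0 <= Rabs x -> Rabs (phi x) <= K / Rabs x /\ Rabs (dphi x) <= K / x ^ 2).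

Definition sym_int (phi : R -> R) (k s : R) : C := @RInt CV (modulated phi k) (- s) s.

Section SlowDecay.
Variables (phi dphi : R -> R) (R0 K k : R).
Hypothesis Hphi : slow_decay phi dphi R0 K.
Hypothesis Hk : k <> 0.

Lemma ex_RInt_modulated_slow_decay u v : @ex_RInt CV (modulated phi k) u v.
Proof.
  destruct Hphi as [_ [_ [Hd _]]].
  apply ex_RInt_modulated, (continuous_of_is_derive _ _ Hd).
Qed.

(* One integration by parts: each boundary term and the remaining integral are [O(K / s)]. *)
Lemma Cmod_RInt_modulated_outside s u v : R0 <= s ->
  (s <= u /\ s <= v) \/ (u <= - s /\ v <= - s) ->
  Cmod (@RInt CV (modulated phi k) u v) <= 3 * K / (Rabs k * s).
Proof.
  destruct Hphi as [HR0 [HK [Hd [Hc Hb]]]]. intros Hs Huv.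
  assert (Hks : 0 < Rabs k) by (apply Rabs_pos_lt, Hk).
  assert (Hbd : forall x, s <= Rabs x -> Rabs (phi x) <= K / s /\ Rabs (dphi x) <= K / x ^ 2).
  { intros x Hx. destruct (Hb x ltac:(lra)) as [h1 h2]. split; [|exact h2].
    eapply Rle_trans; [exact h1|]. unfold Rdiv.
    apply Rmult_le_compat_l; [exact HK | apply Rinv_le_contravar; lra]. }
  assert (Hu : s <= Rabs u) by (unfold Rabs; destruct (Rcase_abs u); lra).
  assert (Hv : s <= Rabs v) by (unfold Rabs; destruct (Rcase_abs v); lra).
  assert (Hint : Cmod (@RInt CV (modulated dphi k) u v) <= K / s).
  { apply Cmod_RInt_le_inv_sq; [lra | exact HK | exact Huv | apply ex_RInt_modulated, Hc|].
    intros x Hx. rewrite Cmod_modulated. apply Hbd, Hx. }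
  rewrite (RInt_modulated_by_parts phi dphi) by assumption.
  rewrite Cmod_mult, Cmod_ibp_factor by exact Hk.
  apply Rle_trans with (/ Rabs k * (K / s + K / s + K / s)); [|right; field; lra].
  apply Rmult_le_compat_l; [apply Rlt_le, Rinv_0_lt_compat, Hks|].
  eapply Rle_trans; [apply Cmod_Cminus_le|]. apply Rplus_le_compat; [|exact Hint].
  eapply Rle_trans; [apply Cmod_Cminus_le|]. rewrite !Cmod_modulated.
  apply Rplus_le_compat; apply Hbd; assumption.
Qed.

Lemma sym_int_cauchy s s' : R0 <= s -> s <= s' ->
  Cmod (Cminus (sym_int phi k s') (sym_int phi k s)) <= 6 * K / (Rabs k * s).
Proof.
  intros Hs Hss. assert (HR0 : 0 < R0) by apply Hphi.
  pose proof ex_RInt_modulated_slow_decay as Hex.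
  unfold sym_int.
  rewrite <- (RInt_Chasles_C _ (- s') (- s) s'), <- (RInt_Chasles_C _ (- s) s s') by apply Hex.
  match goal with |- Cmod ?z <= _ =>
    replace z with (Cplus (@RInt CV (modulated phi k) (- s') (- s)) (@RInt CV (modulated phi k) s s'))
      by ring end.
  eapply Rle_trans; [apply Cmod_triangle|].
  replace (6 * K / (Rabs k * s)) with (3 * K / (Rabs k * s) + 3 * K / (Rabs k * s))
    by (field; split; [lra | apply Rabs_no_R0, Hk]).
  apply Rplus_le_compat; apply (Cmod_RInt_modulated_outside s); lra.
Qed.

Lemma ex_sym_lim_modulated : exists l, sym_lim (modulated phi k) l.
Proof.
  destruct Hphi as [HR0 [HK _]].
  assert (Hks : 0 < Rabs k) by (apply Rabs_pos_lt, Hk).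
  apply (@filterlim_locally_cauchy R CV (Rbar_locally p_infty) (Rbar_locally_filter _)).
  intro eps. pose proof (cond_pos eps) as He.
  assert (Hq : 0 <= 6 * K / Rabs k / eps)
    by (apply Rdiv_le_0_compat; [apply Rdiv_le_0_compat|]; lra).
  set (N := R0 + 6 * K / Rabs k / eps).
  assert (Hclose : forall u v, N < u -> u <= v -> ball (sym_int phi k u) eps (sym_int phi k v)).
  { intros u v Hu Huv. apply (@norm_compat1 R_AbsRing CV). rewrite norm_CV, minus_CV.
    unfold N in Hu. eapply Rle_lt_trans; [apply sym_int_cauchy; lra|].
    replace (6 * K / (Rabs k * u)) with (6 * K / Rabs k / u) by (field; lra).
    apply Rdiv_lt_of_Rdiv_lt; [apply Rdiv_le_0_compat | | |]; lra. }
  exists (fun r => N < r). split; [exists N; auto|].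
  intros u v Hu Hv. destruct (Rle_or_lt u v).
  - apply Hclose; assumption.
  - apply ball_sym, Hclose; lra.
Qed.

Lemma sym_lim_modulated_rate l : sym_lim (modulated phi k) l ->
  forall s, R0 <= s -> Cmod (Cminus l (sym_int phi k s)) <= 6 * K / (Rabs k * s).
Proof.
  intros Hl s Hs.
  apply (Cmod_lim_le (Rbar_locally p_infty) (sym_int phi k)); [exact Hl|].
  exists s. intros r Hr. apply sym_int_cauchy; lra.
Qed.

End SlowDecay.

Lemma norm2_facts a b : 0 <= norm2 a b /\ norm2 a b ^ 2 = a ^ 2 + b ^ 2 /\
  Rabs a <= norm2 a b /\ Rabs b <= norm2 a b.
Proof.
  unfold norm2. pose proof (pow2_ge_0 a). pose proof (pow2_ge_0 b).
  split; [apply sqrt_pos|]. split; [rewrite <- Rsqr_pow2; apply Rsqr_sqrt; lra|].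
  split; rewrite <- sqrt_Rsqr_abs; apply sqrt_le_1_alt; rewrite Rsqr_pow2; lra.
Qed.

Lemma Rdiv_le_Rdiv_l (K u v : R) : 0 <= K -> 0 < u -> u <= v -> K / v <= K / u.
Proof. intros. unfold Rdiv. apply Rmult_le_compat_l; [|apply Rinv_le_contravar]; assumption. Qed.

Lemma Rdiv_pow_le (K n s : R) (j : nat) : 0 <= K -> 1 <= s -> s <= n -> K / n ^ S j <= K / s.
Proof.
  intros HK Hs Hn. apply Rdiv_le_Rdiv_l; [exact HK | lra|].
  induction j as [|j IH]; simpl in *; [lra|].
  apply Rle_trans with (n * 1); [lra | apply Rmult_le_compat_l; lra].
Qed.

Definition cubic_decay (p0 p1 p2 p3 : R -> R) (r K : R) : Prop :=
  0 < r /\ 0 <= K /\ (forall x, is_derive p0 x (p1 x)) /\ (forall x, is_derive p1 x (p2 x)) /\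
  (forall x, is_derive p2 x (p3 x)) /\ (forall x, continuous p3 x) /\
  (forall x, Rabs (p0 x) <= K / norm2 x r /\ Rabs (p1 x) <= K / norm2 x r ^ 2 /\
             Rabs (p2 x) <= K / norm2 x r ^ 3 /\ Rabs (p3 x) <= K / norm2 x r ^ 4).

Section CubicDecay.
Variables (p0 p1 p2 p3 : R -> R) (r K k : R).
Hypothesis Hp : cubic_decay p0 p1 p2 p3 r K.
Hypothesis Hk : k <> 0.

Lemma slow_decay_of_cubic_decay : slow_decay p0 p1 1 K.
Proof.
  destruct Hp as [Hr [HK [D0 [D1 [_ [_ Hb]]]]]].
  split; [lra|]. split; [exact HK|]. split; [exact D0|].
  split; [exact (continuous_of_is_derive _ _ D1)|].
  intros x Hx. destruct (norm2_facts x r) as [_ [_ [Hxn _]]]. destruct (Hb x) as [b0 [b1 _]].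
  split.
  - eapply Rle_trans; [exact b0|]. apply Rdiv_le_Rdiv_l; lra.
  - eapply Rle_trans; [exact b1|]. apply Rdiv_le_Rdiv_l; [exact HK | |].
    + rewrite <- (pow2_abs x). apply pow_lt. lra.
    + rewrite <- (pow2_abs x). apply pow_incr. split; [apply Rabs_pos | exact Hxn].
Qed.

Lemma Cmod_sym_int_le_cubic s : 1 <= s ->
  Cmod (sym_int p0 k s) <=
    2 * (/ Rabs k + (/ Rabs k) ^ 2 + (/ Rabs k) ^ 3) * K / s + (/ Rabs k) ^ 3 * (K * PI / r ^ 3).
Proof.
  destruct Hp as [Hr [HK [D0 [D1 [D2 [C3 Hb]]]]]]. intro Hs.
  set (a := / Rabs k). assert (Ha : 0 < a) by (apply Rinv_0_lt_compat, Rabs_pos_lt, Hk).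
  assert (Hbdry : forall x, s <= Rabs x ->
            Cmod (ibp3_boundary p0 p1 p2 k x) <= (a + a ^ 2 + a ^ 3) * K / s).
  { intros x Hx. destruct (norm2_facts x r) as [_ [_ [Hxn _]]].
    destruct (Hb x) as [b0 [b1 [b2 _]]].
    assert (Hj : forall j (p : R -> R), Rabs (p x) <= K / norm2 x r ^ S j -> Rabs (p x) <= K / s)
      by (intros j p H; eapply Rle_trans; [exact H | apply Rdiv_pow_le; lra]).
    rewrite <- (pow_1 (norm2 x r)) in b0.
    apply (Hj 0%nat) in b0. apply (Hj 1%nat) in b1. apply (Hj 2%nat) in b2.
    eapply Rle_trans; [apply Cmod_ibp3_boundary, Hk|]. fold a.
    apply Rle_trans with (a * (K / s) + a ^ 2 * (K / s) + a ^ 3 * (K / s)); [|right; field; lra].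
    repeat apply Rplus_le_compat; apply Rmult_le_compat_l; try assumption;
      apply pow_le || apply Rlt_le; lra. }
  assert (Hrem : Cmod (@RInt CV (modulated p3 k) (- s) s) <= K / r ^ 2 * PI / r).
  { apply Cmod_RInt_le_Lorentz; [exact Hr | lra | apply Rdiv_le_0_compat, pow_lt; assumption
      | apply ex_RInt_modulated, C3|].
    intros x _. rewrite Cmod_modulated. destruct (norm2_facts x r) as [_ [Hn2 _]].
    destruct (Hb x) as [_ [_ [_ b3]]]. eapply Rle_trans; [exact b3|].
    pose proof (pos_sq_plus_sq x r Hr). pose proof (pow2_ge_0 x).
    replace (norm2 x r ^ 4) with ((x ^ 2 + r ^ 2) * (x ^ 2 + r ^ 2)) by (rewrite <- Hn2; ring).
    replace (K / r ^ 2 / (x ^ 2 + r ^ 2)) with (K / (r ^ 2 * (x ^ 2 + r ^ 2))) by (field; split; lra).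
    assert (0 < r ^ 2) by (apply pow_lt, Hr).
    apply Rdiv_le_Rdiv_l; [exact HK | apply Rmult_lt_0_compat; lra |].
    apply Rmult_le_compat_r; lra. }
  unfold sym_int. rewrite (RInt_modulated_by_parts3 p0 p1 p2 p3) by assumption.
  eapply Rle_trans; [apply Cmod_Cminus_le|]. rewrite Cmod_mult, Cmod_ibp_factor3 by exact Hk.
  fold a. apply Rplus_le_compat.
  - eapply Rle_trans; [apply Cmod_Cminus_le|].
    apply Rle_trans with ((a + a ^ 2 + a ^ 3) * K / s + (a + a ^ 2 + a ^ 3) * K / s);
      [apply Rplus_le_compat; apply Hbdry | right; field; lra];
      unfold Rabs; destruct (Rcase_abs _); lra.
  - apply Rle_trans with (a ^ 3 * (K / r ^ 2 * PI / r)).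
    + apply Rmult_le_compat_l; [apply pow_le; lra | exact Hrem].
    + right. field. lra.
Qed.

Lemma Rle_of_le_plus_inv (a b D : R) : 0 <= D -> (forall s, 1 <= s -> a <= b + D / s) -> a <= b.
Proof.
  intros HD H. apply Rle_plus_epsilon. intros eps Heps.
  set (s := Rmax 1 (D / eps)).
  assert (Hs1 : 1 <= s) by apply Rmax_l. assert (HsD : D / eps <= s) by apply Rmax_r.
  eapply Rle_trans; [apply H, Hs1|]. apply Rplus_le_compat_l.
  apply (Rmult_le_reg_r s); [lra|]. replace (D / s * s) with D by (field; lra).
  apply (Rmult_le_compat_r eps) in HsD; [|lra].
  replace (D / eps * eps) with D in HsD by (field; lra). lra.
Qed.

Lemma Cmod_sym_lim_modulated_le_cubic l : sym_lim (modulated p0 k) l ->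
  Cmod l <= K * PI / (Rabs k ^ 3 * r ^ 3).
Proof.
  intro Hl. destruct Hp as [Hr [HK _]].
  set (a := / Rabs k). assert (Ha : 0 < a) by (apply Rinv_0_lt_compat, Rabs_pos_lt, Hk).
  apply (Rle_of_le_plus_inv _ _ (2 * (a + a ^ 2 + a ^ 3) * K + 6 * K * a));
    [assert (0 < a ^ 2) by (apply pow_lt, Ha); assert (0 < a ^ 3) by (apply pow_lt, Ha); nra|].
  intros s Hs.
  replace l with (Cplus (sym_int p0 k s) (Cminus l (sym_int p0 k s))) by ring.
  eapply Rle_trans; [apply Cmod_triangle|].
  eapply Rle_trans; [apply Rplus_le_compat;
    [apply Cmod_sym_int_le_cubic, Hs
    | apply (sym_lim_modulated_rate _ _ _ _ _ slow_decay_of_cubic_decay Hk l Hl s Hs)]|].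
  pose proof (Rabs_pos_lt k Hk). right. unfold a. rewrite pow_inv.
  field. repeat split; try lra; apply pow_nonzero; lra.
Qed.

End CubicDecay.

(** * Improper, parametric and iterated integrals *)

Definition inv_sq_decay (h : R -> C) (R0 M : R) : Prop :=
  0 < R0 /\ 0 <= M /\ (forall a b, @ex_RInt CV h a b) /\
  (forall y, R0 <= Rabs y -> Cmod (h y) <= M / y ^ 2).

Lemma improper_int_of_inv_sq_decay (h : R -> C) R0 M : inv_sq_decay h R0 M ->
  exists l, sym_lim h l /\ improper_int h l.
Proof.
  intros [HR0 [HM [Hex Hb]]].
  set (I := fun ab : R * R => @RInt CV h (fst ab) (snd ab)).
  assert (Hc : exists l, filterlim I (filter_prod (Rbar_locally m_infty) (Rbar_locally p_infty))
                                   (@locally CV l)).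
  { apply (@filterlim_locally_cauchy (R * R) CV _ _).
    intro eps. pose proof (cond_pos eps) as He.
    assert (Hq : 0 <= 2 * M / eps) by (apply Rdiv_le_0_compat; lra).
    set (N := R0 + 2 * M / eps + 1).
    assert (Htail : forall u v, (N <= u /\ N <= v) \/ (u <= - N /\ v <= - N) ->
              Cmod (@RInt CV h u v) <= M / N).
    { intros u v Huv. apply Cmod_RInt_le_inv_sq; [unfold N; lra | exact HM | exact Huv | apply Hex|].
      intros y Hy. apply Hb. unfold N in Hy. lra. }
    exists (fun ab : R * R => fst ab < - N /\ N < snd ab). split.
    - apply (Filter_prod _ _ _ (fun a => a < - N) (fun b => N < b));
        [exists (- N); auto | exists N; auto | simpl; auto].
    - intros [a b] [a' b'] [Ha Hb'] [Ha' Hb'']. simpl in *.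
      apply (@norm_compat1 R_AbsRing CV). rewrite norm_CV, minus_CV. unfold I; simpl.
      rewrite <- (RInt_Chasles_C h a' a b'), <- (RInt_Chasles_C h a b b') by apply Hex.
      match goal with |- Cmod ?z < _ =>
        replace z with (Cplus (@RInt CV h a' a) (@RInt CV h b b')) by ring end.
      eapply Rle_lt_trans; [apply Cmod_triangle|].
      eapply Rle_lt_trans; [apply Rplus_le_compat; apply Htail; lra|].
      apply (Rmult_lt_reg_r N); [unfold N; lra|].
      replace ((M / N + M / N) * N) with (2 * M) by (field; unfold N; lra).
      unfold N. replace (eps * (R0 + 2 * M / eps + 1)) with (eps * R0 + 2 * M + eps) by (field; lra).
      assert (0 < eps * R0) by (apply Rmult_lt_0_compat; lra). lra. }
  destruct Hc as [l Hl]. exists l. split.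
  - apply (filterlim_comp _ _ _ (fun r => (- r, r)) I _
      (filter_prod (Rbar_locally m_infty) (Rbar_locally p_infty))); [|exact Hl].
    apply filterlim_pair; [apply (filterlim_Rbar_opp p_infty) | apply filterlim_id].
  - intros P HP. specialize (Hl P HP). unfold filtermap in Hl. unfold filtermapi.
    eapply filter_imp; [|exact Hl]. intros [a b] H. exists (I (a, b)).
    split; [apply (@RInt_correct CV), Hex | exact H].
Qed.

Lemma continuous_of_delta (phi : R -> R) x :
  (forall eps : posreal, exists d : posreal,
     forall y, Rabs (y - x) < d -> Rabs (phi y - phi x) < eps) ->
  continuous phi x.
Proof.
  intro H. apply filterlim_locally. intro eps. destruct (H eps) as [d Hd].
  exists d. intros y Hy. apply Hd, Hy.
Qed.

Lemma continuity_2d_pt_continuous_l (h : R -> R -> R) x y :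
  continuity_2d_pt h x y -> continuous (fun t => h t y) x.
Proof.
  intro H. apply continuous_of_delta. intro eps. destruct (H eps) as [d Hd]. exists d.
  intros u Hu. apply Hd; [exact Hu | rewrite Rminus_diag, Rabs_R0; apply cond_pos].
Qed.

Lemma continuity_2d_pt_continuous_r (h : R -> R -> R) x y :
  continuity_2d_pt h x y -> continuous (fun t => h x t) y.
Proof.
  intro H. apply continuous_of_delta. intro eps. destruct (H eps) as [d Hd]. exists d.
  intros u Hu. apply Hd; [rewrite Rminus_diag, Rabs_R0; apply cond_pos | exact Hu].
Qed.

Lemma continuity_2d_pt_swap (h : R -> R -> R) x y :
  continuity_2d_pt h x y -> continuity_2d_pt (fun u v => h v u) y x.
Proof. intros H eps. destruct (H eps) as [d Hd]. exists d. intros u v Hu Hv. apply Hd; assumption. Qed.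

Section ParametricIntegral.
Variable h : R -> R -> R.
Hypothesis Hh : forall x y, continuity_2d_pt h x y.

Lemma ex_RInt_param_l y a b : ex_RInt (fun x => h x y) a b.
Proof.
  apply (@ex_RInt_continuous R_CompleteNormedModule). intros.
  apply continuity_2d_pt_continuous_l, Hh.
Qed.

(* Uniform continuity of [h] on the compact strip [[a, b] x [y0 - 1, y0 + 1]]. *)
Lemma continuous_RInt_param a b y0 : continuous (fun y => RInt (fun x => h x y) a b) y0.
Proof.
  apply continuous_of_delta. intro eps.
  set (e := eps / (Rabs (b - a) + 1)).
  assert (He : 0 < e)
    by (unfold e; apply Rdiv_lt_0_compat; [apply cond_pos | pose proof (Rabs_pos (b - a)); lra]).
  destruct (uniform_continuity_2d h (Rmin a b) (Rmax a b) (y0 - 1) (y0 + 1)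
      (fun x y _ _ => Hh x y) (mkposreal _ He)) as [d Hd].
  assert (Hd1 : 0 < Rmin d 1) by (apply Rmin_pos; [apply cond_pos | lra]).
  exists (mkposreal _ Hd1). simpl. intros y Hy.
  assert (Hyd : Rabs (y - y0) < d) by (eapply Rlt_le_trans; [exact Hy | apply Rmin_l]).
  assert (Hy1 : Rabs (y - y0) < 1) by (eapply Rlt_le_trans; [exact Hy | apply Rmin_r]).
  rewrite <- (RInt_minus (fun x => h x y) (fun x => h x y0)) by apply ex_RInt_param_l.
  apply Rle_lt_trans with (Rabs (b - a) * e).
  - apply (@norm_RInt_le_const_abs R_NormedModule (fun x => h x y - h x y0) a b).
    + intros x Hx. left. apply (Hd x y0 x y); try lra.
      * apply Rabs_def2 in Hy1. lra.
      * rewrite Rminus_diag, Rabs_R0. apply cond_pos.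
    + apply (@RInt_correct R_CompleteNormedModule), (@ex_RInt_minus R_NormedModule);
        apply ex_RInt_param_l.
  - unfold e. pose proof (Rabs_pos (b - a)). pose proof (cond_pos eps).
    apply (Rmult_lt_reg_r (Rabs (b - a) + 1)); [lra|].
    replace (Rabs (b - a) * (eps / (Rabs (b - a) + 1)) * (Rabs (b - a) + 1))
      with (Rabs (b - a) * eps) by (field; lra).
    nra.
Qed.

Lemma ex_RInt_RInt_param a b c d : ex_RInt (fun y => RInt (fun x => h x y) a b) c d.
Proof.
  apply (@ex_RInt_continuous R_CompleteNormedModule). intros. apply continuous_RInt_param.
Qed.

Lemma is_derive_RInt_upper y a t : is_derive (fun u => RInt (fun x => h x y) a u) t (h t y).
Proof.
  apply (is_derive_RInt (fun x => h x y) _ a t).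
  - apply filter_forall. intros. apply (@RInt_correct R_CompleteNormedModule), ex_RInt_param_l.
  - apply continuity_2d_pt_continuous_l, Hh.
Qed.

Lemma is_derive_RInt_RInt_upper a c d t :
  is_derive (fun u => RInt (fun y => RInt (fun x => h x y) a u) c d) t (RInt (fun y => h t y) c d).
Proof.
  rewrite (RInt_ext (fun y => h t y) (fun y => Derive (fun u => RInt (fun x => h x y) a u) t))
    by (intros y _; symmetry; apply is_derive_unique, is_derive_RInt_upper).
  apply (is_derive_RInt_param (fun u y => RInt (fun x => h x y) a u) c d t).
  - apply filter_forall. intros t' y _. eexists. apply is_derive_RInt_upper.
  - intros y _. apply (continuity_2d_pt_ext h); [|apply Hh].
    intros u v. symmetry. apply is_derive_unique, is_derive_RInt_upper.
  - apply filter_forall. intro t'. apply ex_RInt_RInt_param.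
Qed.

End ParametricIntegral.

(* Both sides, as functions of the upper bound [b], vanish at [a] and have the same
   derivative [RInt (h b) c d]. *)
Lemma RInt_RInt_swap (h : R -> R -> R) : (forall x y, continuity_2d_pt h x y) ->
  forall a b c d,
  RInt (fun y => RInt (fun x => h x y) a b) c d = RInt (fun x => RInt (fun y => h x y) c d) a b.
Proof.
  intros Hh a b c d.
  assert (Hs : forall x y, continuity_2d_pt (fun u v => h v u) x y)
    by (intros; apply continuity_2d_pt_swap, Hh).
  set (W := fun x => RInt (fun y => h x y) c d).
  set (Phi := fun t => RInt (fun y => RInt (fun x => h x y) a t) c d).
  set (Psi := fun t => RInt W a t).
  assert (DPhi : forall t, is_derive Phi t (W t)) by (intro; apply is_derive_RInt_RInt_upper, Hh).
  assert (DPsi : forall t, is_derive Psi t (W t)).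
  { intro t. apply (is_derive_RInt W Psi a t).
    - apply filter_forall. intro u. apply (@RInt_correct R_CompleteNormedModule).
      apply (ex_RInt_RInt_param (fun u v => h v u) Hs).
    - apply (continuous_RInt_param (fun u v => h v u) Hs). }
  assert (D0 : forall t, is_derive (fun t => Phi t - Psi t) t 0).
  { intro t. replace 0 with (W t - W t) by apply Rminus_diag. apply (is_derive_minus Phi Psi); auto. }
  assert (Ha : Phi a - Psi a = 0).
  { unfold Phi, Psi. rewrite (@RInt_point R_CompleteNormedModule).
    rewrite (RInt_ext _ (fun _ => 0)) by (intros; apply (@RInt_point R_CompleteNormedModule)).
    rewrite RInt_const. change (zero : R) with 0.
    rewrite (@scal_zero_r R_AbsRing R_NormedModule). apply Rminus_diag. }
  assert (Hb : Phi b - Psi b = Phi a - Psi a).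
  { destruct (Rtotal_order a b) as [H|[H|H]].
    - symmetry. apply (eq_is_derive (fun t => Phi t - Psi t) a b); auto.
    - subst. reflexivity.
    - apply (eq_is_derive (fun t => Phi t - Psi t) b a); auto. }
  unfold Phi, Psi, W in *. lra.
Qed.

Definition continuity_2d_C (H : R -> R -> C) : Prop :=
  forall x y, continuity_2d_pt (fun u v => fst (H u v)) x y /\
              continuity_2d_pt (fun u v => snd (H u v)) x y.

Lemma continuity_2d_C_swap (H : R -> R -> C) :
  continuity_2d_C H -> continuity_2d_C (fun u v => H v u).
Proof. intros Hc x y. split; apply (continuity_2d_pt_swap (fun u v => _ (H u v))), Hc. Qed.

Lemma RInt_C_components (g : R -> C) a b : @ex_RInt CV g a b ->
  @RInt CV g a b = (RInt (fun y => fst (g y)) a b, RInt (fun y => snd (g y)) a b).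
Proof.
  intro H. pose proof (@RInt_correct CV g a b H) as Hg.
  rewrite (is_RInt_unique _ _ _ _ (is_RInt_C_fst _ _ _ _ Hg)),
    (is_RInt_unique _ _ _ _ (is_RInt_C_snd _ _ _ _ Hg)).
  apply surjective_pairing.
Qed.

Section ParametricIntegralC.
Variable H : R -> R -> C.
Hypothesis HH : continuity_2d_C H.

Lemma ex_RInt_C_param_l y a b : @ex_RInt CV (fun x => H x y) a b.
Proof.
  apply (@ex_RInt_fct_extend_pair R_NormedModule R_NormedModule);
    apply (ex_RInt_param_l (fun u v => _ (H u v))); intros; apply HH.
Qed.

Lemma continuous_RInt_C_param a b y0 :
  @continuous R_UniformSpace CV (fun y => @RInt CV (fun x => H x y) a b) y0.
Proof.
  apply (continuous_ext (fun y => (RInt (fun x => fst (H x y)) a b, RInt (fun x => snd (H x y)) a b))).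
  - intro y. symmetry. apply RInt_C_components, ex_RInt_C_param_l.
  - apply continuous_C_pair; simpl;
      apply (continuous_RInt_param (fun u v => _ (H u v))); intros; apply HH.
Qed.

Lemma ex_RInt_RInt_C_param a b c d :
  @ex_RInt CV (fun y => @RInt CV (fun x => H x y) a b) c d.
Proof. apply ex_RInt_continuous. intros. apply continuous_RInt_C_param. Qed.

End ParametricIntegralC.

Lemma RInt_RInt_C_swap (H : R -> R -> C) : continuity_2d_C H -> forall a b c d,
  @RInt CV (fun y => @RInt CV (fun x => H x y) a b) c d =
  @RInt CV (fun x => @RInt CV (fun y => H x y) c d) a b.
Proof.
  intros Hc a b c d. pose proof (continuity_2d_C_swap H Hc) as Hs.
  rewrite (RInt_C_components _ c d) by apply ex_RInt_RInt_C_param, Hc.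
  rewrite (RInt_C_components _ a b) by apply (ex_RInt_RInt_C_param _ Hs).
  f_equal.
  - rewrite (RInt_ext _ (fun y => RInt (fun x => fst (H x y)) a b))
      by (intros; rewrite RInt_C_components by apply ex_RInt_C_param_l, Hc; reflexivity).
    rewrite (RInt_ext (fun x => fst _) (fun x => RInt (fun y => fst (H x y)) c d))
      by (intros; rewrite RInt_C_components by apply (ex_RInt_C_param_l _ Hs); reflexivity).
    apply (RInt_RInt_swap (fun u v => fst (H u v))). intros; apply Hc.
  - rewrite (RInt_ext _ (fun y => RInt (fun x => snd (H x y)) a b))
      by (intros; rewrite RInt_C_components by apply ex_RInt_C_param_l, Hc; reflexivity).
    rewrite (RInt_ext (fun x => snd _) (fun x => RInt (fun y => snd (H x y)) c d))
      by (intros; rewrite RInt_C_components by apply (ex_RInt_C_param_l _ Hs); reflexivity).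
    apply (RInt_RInt_swap (fun u v => snd (H u v))). intros; apply Hc.
Qed.

Lemma continuity_2d_C_of_l (P : R -> C) :
  (forall x, @continuous R_UniformSpace CV P x) -> continuity_2d_C (fun u v => P u).
Proof.
  intros HP x y. split;
    apply (continuity_1d_2d_pt_comp (fun t => _ (P t)) (fun u v => u));
    try apply continuity_2d_pt_id1; apply continuity_pt_filterlim;
    [apply continuous_C_fst | apply continuous_C_snd]; apply HP.
Qed.

Lemma continuity_2d_C_of_r (P : R -> C) :
  (forall x, @continuous R_UniformSpace CV P x) -> continuity_2d_C (fun u v => P v).
Proof.
  intros HP x y. split;
    apply (continuity_1d_2d_pt_comp (fun t => _ (P t)) (fun u v => v));
    try apply continuity_2d_pt_id2; apply continuity_pt_filterlim;
    [apply continuous_C_fst | apply continuous_C_snd]; apply HP.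
Qed.

Lemma continuity_2d_C_mult (H1 H2 : R -> R -> C) : continuity_2d_C H1 -> continuity_2d_C H2 ->
  continuity_2d_C (fun u v => Cmult (H1 u v) (H2 u v)).
Proof.
  intros A B x y. destruct (A x y) as [a1 a2], (B x y) as [b1 b2]. split; simpl.
  - apply continuity_2d_pt_minus; apply continuity_2d_pt_mult; assumption.
  - apply continuity_2d_pt_plus; apply continuity_2d_pt_mult; assumption.
Qed.

Lemma continuity_2d_C_modulated (g : R -> R -> R) k : (forall x y, continuity_2d_pt g x y) ->
  continuity_2d_C (fun u v => Cmult (RtoC (g u v)) (wave k u)).
Proof.
  intro Hg. apply continuity_2d_C_mult.
  - intros x y. split; simpl; [apply Hg | apply continuity_2d_pt_const].
  - apply continuity_2d_C_of_l, continuous_wave.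
Qed.

Lemma continuity_2d_C_modulated2 (g : R -> R -> R) k1 k2 : (forall x y, continuity_2d_pt g x y) ->
  continuity_2d_C (fun u v => Cmult (Cmult (RtoC (g u v)) (wave k1 u)) (wave k2 v)).
Proof.
  intro Hg. apply continuity_2d_C_mult.
  - apply continuity_2d_C_modulated, Hg.
  - apply continuity_2d_C_of_r, continuous_wave.
Qed.

(** * Decay hypotheses and permutations of the variables *)

Definition pure_decay3 (f : R -> R -> R -> R) : Prop :=
  smooth3 f /\ very_moderate_decrease3 f /\
  forall d n, (1 <= n)%nat -> moderate_decrease3 (S n) (pdl3 (repeat d n) f).

Lemma pure_decay3_of_normal3 f : normal3 f -> pure_decay3 f.
Proof.
  intros [Hs [_ [_ [_ [Hv [Hm _]]]]]]. split; [exact Hs|]. split; [exact Hv|].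
  intros d n Hn. replace (S n) with (n + 0 + 0 + 1)%nat by lia.
  destruct d.
  - pose proof (Hm n 0%nat 0%nat ltac:(lia)) as H.
    unfold pdijk in H. simpl in H. rewrite app_nil_r in H. exact H.
  - replace (n + 0 + 0 + 1)%nat with (0 + n + 0 + 1)%nat by lia.
    pose proof (Hm 0%nat n 0%nat ltac:(lia)) as H.
    unfold pdijk in H. simpl in H. rewrite app_nil_r in H. exact H.
  - replace (n + 0 + 0 + 1)%nat with (0 + 0 + n + 1)%nat by lia.
    exact (Hm 0%nat 0%nat n ltac:(lia)).
Qed.

Definition app3 (h : R -> R -> R -> R) (p : R * R * R) : R := h (fst (fst p)) (snd (fst p)) (snd p).

Definition permute (perm : R * R * R -> R * R * R) (h : R -> R -> R -> R) : R -> R -> R -> R :=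
  fun a b c => app3 h (perm ((a, b), c)).

Section Permutation.
Variables (perm : R * R * R -> R * R * R) (dperm : dir3 -> dir3).
Hypothesis pd3_permute : forall d h, pd3 d (permute perm h) = permute perm (pd3 (dperm d) h).
Hypothesis ex_pd3_permute : forall d h,
  (forall x y z, ex_pd3 (dperm d) h x y z) -> forall x y z, ex_pd3 d (permute perm h) x y z.
Hypothesis norm3_perm : forall p, app3 norm3 (perm p) = app3 norm3 p.
Hypothesis ball_perm : forall p q (eps : R), ball p eps q -> ball (perm p) eps (perm q).

Lemma pdl3_permute l h : pdl3 l (permute perm h) = permute perm (pdl3 (map dperm l) h).
Proof. induction l as [|d l IH]; [reflexivity|]. simpl. rewrite IH. apply pd3_permute. Qed.

Lemma continuous_permute (h : R -> R -> R -> R) p :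
  continuous (app3 h) (perm p) -> continuous (app3 (permute perm h)) p.
Proof.
  intro Hh. apply (continuous_ext (fun q => app3 h (perm q))); [intros [[x y] z]; reflexivity|].
  apply (continuous_comp perm (app3 h)); [|exact Hh].
  apply filterlim_locally. intro eps. exists eps. intros q Hq. apply ball_perm, Hq.
Qed.

Lemma pure_decay3_permute f : pure_decay3 f -> pure_decay3 (permute perm f).
Proof.
  intros [Hs [[K0 HK0] Hm]]. split; [|split].
  - intro l. rewrite pdl3_permute. split.
    + intro d. apply ex_pd3_permute. intros. apply (Hs (map dperm l)).
    + intro p. apply (continuous_permute (pdl3 (map dperm l) f)), (Hs (map dperm l)).
  - exists K0. intros x y z Hn.
    change (norm3 x y z) with (app3 norm3 ((x, y), z)) in *. rewrite <- norm3_perm in *.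
    apply HK0, Hn.
  - intros d n Hn. destruct (Hm (dperm d) n Hn) as [K HK]. exists K. intros x y z Hxyz.
    rewrite pdl3_permute, map_repeat.
    change (norm3 x y z) with (app3 norm3 ((x, y), z)) in *. rewrite <- norm3_perm in *.
    apply HK, Hxyz.
Qed.

End Permutation.

Definition swap12 (p : R * R * R) : R * R * R := ((snd (fst p), fst (fst p)), snd p).
Definition swap23 (p : R * R * R) : R * R * R := ((fst (fst p), snd p), snd (fst p)).

Lemma pure_decay3_swap12 f : pure_decay3 f -> pure_decay3 (permute swap12 f).
Proof.
  apply (pure_decay3_permute swap12 (fun d => match d with dX => dY | dY => dX | dZ => dZ end)).
  - intros [] h; cbv -[Derive]; reflexivity.
  - intros [] h H x y z; exact (H _ _ _).
  - intros [[x y] z]. unfold app3, norm3; simpl. f_equal. ring.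
  - intros [[x y] z] [[x' y'] z'] eps [[Hx Hy] Hz]. repeat split; assumption.
Qed.

Lemma pure_decay3_swap23 f : pure_decay3 f -> pure_decay3 (permute swap23 f).
Proof.
  apply (pure_decay3_permute swap23 (fun d => match d with dX => dX | dY => dZ | dZ => dY end)).
  - intros [] h; cbv -[Derive]; reflexivity.
  - intros [] h H x y z; exact (H _ _ _).
  - intros [[x y] z]. unfold app3, norm3; simpl. f_equal. ring.
  - intros [[x y] z] [[x' y'] z'] eps [[Hx Hy] Hz]. repeat split; assumption.
Qed.

Definition uniform_decay (g : R -> R -> R -> R) (K : R) : Prop :=
  smooth3 g /\ 0 <= K /\
  forall a b c, 1 < norm3 a b c ->
    (forall n, (n <= 3)%nat -> Rabs (pdl3 (repeat dX n) g a b c) <= K / norm3 a b c ^ S n) /\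
    Rabs (pd3 dY g a b c) <= K / norm3 a b c ^ 2.

Lemma norm3_facts a b c : 0 <= norm3 a b c /\ norm3 a b c ^ 2 = a ^ 2 + b ^ 2 + c ^ 2 /\
  Rabs a <= norm3 a b c /\ Rabs b <= norm3 a b c /\ Rabs c <= norm3 a b c.
Proof.
  unfold norm3. pose proof (pow2_ge_0 a). pose proof (pow2_ge_0 b). pose proof (pow2_ge_0 c).
  split; [apply sqrt_pos|]. split; [rewrite <- Rsqr_pow2; apply Rsqr_sqrt; lra|].
  repeat split; rewrite <- sqrt_Rsqr_abs; apply sqrt_le_1_alt; rewrite Rsqr_pow2; lra.
Qed.

Lemma norm3_norm2 x b c : norm3 x b c = norm2 x (norm2 b c).
Proof. unfold norm2 at 1, norm3. destruct (norm2_facts b c) as [_ [-> _]]. f_equal. ring. Qed.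

Lemma uniform_decay_of_pure_decay3 g : pure_decay3 g -> exists K, uniform_decay g K.
Proof.
  intros [Hs [[K0 H0] Hm]].
  destruct (Hm dX 1%nat) as [K1 H1]; [lia|]. destruct (Hm dX 2%nat) as [K2 H2]; [lia|].
  destruct (Hm dX 3%nat) as [K3 H3]; [lia|]. destruct (Hm dY 1%nat) as [K4 H4]; [lia|].
  set (K := Rabs K0 + Rabs K1 + Rabs K2 + Rabs K3 + Rabs K4).
  pose proof (Rabs_pos K0). pose proof (Rabs_pos K1). pose proof (Rabs_pos K2).
  pose proof (Rabs_pos K3). pose proof (Rabs_pos K4).
  pose proof (Rle_abs K0). pose proof (Rle_abs K1). pose proof (Rle_abs K2).
  pose proof (Rle_abs K3). pose proof (Rle_abs K4).
  exists K. split; [exact Hs|]. split; [unfold K; lra|].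
  intros a b c Hn. set (N := norm3 a b c) in *.
  assert (Hw : forall Ki m h, Ki <= K -> Rabs h <= Ki / N ^ m -> Rabs h <= K / N ^ m).
  { intros Ki m h HKi Hh. eapply Rle_trans; [exact Hh|]. unfold Rdiv.
    apply Rmult_le_compat_r; [apply Rlt_le, Rinv_0_lt_compat, pow_lt; lra | exact HKi]. }
  split.
  - intros [|[|[|[|n]]]] Hn3; [| | | |lia].
    + apply (Hw K0); [unfold K; lra|]. rewrite pow_1. apply H0, Hn.
    + apply (Hw K1); [unfold K; lra | apply H1, Hn].
    + apply (Hw K2); [unfold K; lra | apply H2, Hn].
    + apply (Hw K3); [unfold K; lra | apply H3, Hn].
  - apply (Hw K4); [unfold K; lra | apply H4, Hn].
Qed.

Section UniformDecay.
Variables (g : R -> R -> R -> R) (K : R).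
Hypothesis Hg : uniform_decay g K.

Lemma uniform_decay_K : 0 <= K.
Proof. apply Hg. Qed.

Lemma is_derive_slice_x l a b c : is_derive (fun t => pdl3 l g t b c) a (pdl3 (dX :: l) g a b c).
Proof. apply Derive_correct. exact (proj1 (proj1 Hg l) dX a b c). Qed.

Lemma is_derive_slice_y a b c : is_derive (fun t => g a t c) b (pd3 dY g a b c).
Proof. apply Derive_correct. exact (proj1 (proj1 Hg nil) dY a b c). Qed.

Lemma continuity_2d_slice l c a b : continuity_2d_pt (fun u v => pdl3 l g u v c) a b.
Proof.
  apply continuity_2d_pt_filterlim.
  apply (filterlim_comp _ _ _ (fun z : R * R => ((fst z, snd z), c)) (app3 (pdl3 l g)) _
    (locally ((a, b), c))); [|exact (proj2 (proj1 Hg l) ((a, b), c))].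
  apply filterlim_locally. intro eps.
  apply (proj1 (locally_2d_locally (fun u v => ball ((a, b), c) eps ((u, v), c)) a b)).
  exists eps. intros u v Hu Hv. repeat split; [exact Hu | exact Hv | apply ball_center].
Qed.

Lemma continuous_slice_x l b c x : continuous (fun t => pdl3 l g t b c) x.
Proof. apply (continuity_2d_pt_continuous_l (fun u v => pdl3 l g u v c)), continuity_2d_slice. Qed.

Lemma continuous_slice_y l a c y : continuous (fun t => pdl3 l g a t c) y.
Proof. apply (continuity_2d_pt_continuous_r (fun u v => pdl3 l g u v c)), continuity_2d_slice. Qed.

Lemma uniform_decay_bound_x n a b c : (n <= 3)%nat -> 1 < norm3 a b c ->
  Rabs (pdl3 (repeat dX n) g a b c) <= K / norm3 a b c ^ S n.
Proof. intros Hn3 Hn. apply Hg; assumption. Qed.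

Lemma uniform_decay_bound_y a b c : 1 < norm3 a b c ->
  Rabs (pd3 dY g a b c) <= K / norm3 a b c ^ 2.
Proof. intro Hn. apply Hg, Hn. Qed.

Lemma slow_decay_slice b c : slow_decay (fun t => g t b c) (fun t => pd3 dX g t b c) 2 K.
Proof.
  split; [lra|]. split; [apply uniform_decay_K|].
  split; [intro; apply (is_derive_slice_x nil)|].
  split; [intro; apply (continuous_slice_x (dX :: nil))|].
  intros x Hx. destruct (norm3_facts x b c) as [_ [_ [Hxn _]]].
  pose proof uniform_decay_K as HK.
  pose proof (uniform_decay_bound_x 0 x b c ltac:(lia) ltac:(lra)) as b0.
  pose proof (uniform_decay_bound_x 1 x b c ltac:(lia) ltac:(lra)) as b1.
  simpl in b0, b1. rewrite Rmult_1_r in b0. split.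
  - eapply Rle_trans; [exact b0 | apply Rdiv_le_Rdiv_l; lra].
  - eapply Rle_trans; [exact b1|]. apply Rdiv_le_Rdiv_l; [exact HK | |].
    + rewrite <- (pow2_abs x). apply pow_lt. lra.
    + rewrite <- (pow2_abs x). simpl. rewrite Rmult_1_r. apply Rmult_le_compat; lra.
Qed.

Lemma cubic_decay_slice b c : 1 < norm2 b c ->
  cubic_decay (fun t => g t b c) (fun t => pd3 dX g t b c) (fun t => pd3 dX (pd3 dX g) t b c)
    (fun t => pd3 dX (pd3 dX (pd3 dX g)) t b c) (norm2 b c) K.
Proof.
  intro Hbc. split; [lra|]. split; [apply uniform_decay_K|].
  split; [intro; apply (is_derive_slice_x nil)|].
  split; [intro; apply (is_derive_slice_x (dX :: nil))|].
  split; [intro; apply (is_derive_slice_x (dX :: dX :: nil))|].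
  split; [intro; apply (continuous_slice_x (dX :: dX :: dX :: nil))|].
  intro x. rewrite <- norm3_norm2.
  assert (Hn : 1 < norm3 x b c).
  { destruct (norm3_facts x b c) as [_ [Hn3 _]]. destruct (norm2_facts b c) as [Hn0 [Hn2 _]].
    destruct (Rlt_or_le 1 (norm3 x b c)) as [|Hle]; [assumption|].
    pose proof (norm3_facts x b c) as [H0 _]. pose proof (pow2_ge_0 x). nra. }
  pose proof (uniform_decay_bound_x 0 x b c ltac:(lia) Hn) as b0.
  simpl in b0. rewrite Rmult_1_r in b0.
  repeat split; [exact b0 | apply (uniform_decay_bound_x 1) | apply (uniform_decay_bound_x 2)
    | apply (uniform_decay_bound_x 3)]; solve [lia | exact Hn].
Qed.

Lemma Cmod_sym_lim_slice_le k b c l : k <> 0 -> 1 < norm2 b c ->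
  sym_lim (modulated (fun t => g t b c) k) l -> Cmod l <= K * PI / (Rabs k ^ 3 * norm2 b c ^ 3).
Proof.
  intros Hk Hbc Hl.
  exact (Cmod_sym_lim_modulated_le_cubic _ _ _ _ _ _ k (cubic_decay_slice b c Hbc) Hk l Hl).
Qed.

End UniformDecay.

(** * Double transforms *)

Lemma Cmod_sym_int_le_Lorentz (psi : R -> R) k P M r : 0 < P -> 0 <= M -> 0 <= r ->
  (forall y, continuous psi y) -> (forall y, Rabs (psi y) <= M / (y ^ 2 + P ^ 2)) ->
  Cmod (sym_int psi k r) <= M * PI / P.
Proof.
  intros HP HM Hr Hc Hb. apply Cmod_RInt_le_Lorentz; [exact HP | lra | exact HM
    | apply ex_RInt_modulated, Hc|].
  intros y _. rewrite Cmod_modulated. apply Hb.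
Qed.

Lemma Cmod_sym_int_le_by_parts (psi dpsi : R -> R) k P M r : k <> 0 -> 0 < P -> 0 <= M -> 0 <= r ->
  (forall y, is_derive psi y (dpsi y)) -> (forall y, continuous dpsi y) ->
  (forall y, Rabs (psi y) <= M / P) -> (forall y, Rabs (dpsi y) <= M / (y ^ 2 + P ^ 2)) ->
  Cmod (sym_int psi k r) <= (2 * (M / P) + M * PI / P) / Rabs k.
Proof.
  intros Hk HP HM Hr Hd Hc B0 B1. unfold sym_int.
  rewrite (RInt_modulated_by_parts psi dpsi), Cmod_mult, Cmod_ibp_factor by assumption.
  apply Rle_trans with (/ Rabs k * (2 * (M / P) + M * PI / P)); [|right; unfold Rdiv; ring].
  apply Rmult_le_compat_l; [apply Rlt_le, Rinv_0_lt_compat, Rabs_pos_lt, Hk|].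
  eapply Rle_trans; [apply Cmod_Cminus_le|]. apply Rplus_le_compat.
  - eapply Rle_trans; [apply Cmod_Cminus_le|]. rewrite !Cmod_modulated.
    pose proof (B0 r). pose proof (B0 (- r)). lra.
  - apply Cmod_sym_int_le_Lorentz; assumption.
Qed.

Section DoubleTransform.
Variables (g : R -> R -> R -> R) (K k1 k2 c : R).
Hypothesis Hg : uniform_decay g K.
Hypotheses (Hk1 : k1 <> 0) (Hk2 : k2 <> 0).

Local Notation g1 := (pd3 dX g).
Local Notation g2 := (pd3 dX (pd3 dX g)).
Local Notation g3 := (pd3 dX (pd3 dX (pd3 dX g))).
Local Notation gy := (pd3 dY g).
Local Notation a1 := (/ Rabs k1).

Lemma inv_Rabs_k1_pos : 0 < a1.
Proof. apply Rinv_0_lt_compat, Rabs_pos_lt, Hk1. Qed.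

Lemma bounds_at_large_x p y : 2 <= Rabs p ->
  Rabs (g p y c) <= K / Rabs p /\ Rabs (gy p y c) <= K / (y ^ 2 + Rabs p ^ 2) /\
  Rabs (g1 p y c) <= K / (y ^ 2 + Rabs p ^ 2) /\
  Rabs (g2 p y c) <= K / Rabs p / (y ^ 2 + Rabs p ^ 2).
Proof.
  intro Hp. pose proof (uniform_decay_K _ _ Hg) as HK.
  destruct (norm3_facts p y c) as [_ [Hn2 [Hpn _]]].
  assert (Hn : 1 < norm3 p y c) by lra.
  pose proof (uniform_decay_bound_x _ _ Hg 0 p y c ltac:(lia) Hn) as b0.
  pose proof (uniform_decay_bound_x _ _ Hg 1 p y c ltac:(lia) Hn) as b1.
  pose proof (uniform_decay_bound_x _ _ Hg 2 p y c ltac:(lia) Hn) as b2.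
  pose proof (uniform_decay_bound_y _ _ Hg p y c Hn) as by'.
  simpl in b0, b1, b2. rewrite Rmult_1_r in b0, b1, b2.
  assert (Hq : y ^ 2 + Rabs p ^ 2 <= norm3 p y c * norm3 p y c).
  { replace (norm3 p y c * norm3 p y c) with (norm3 p y c ^ 2) by ring.
    rewrite Hn2, pow2_abs. pose proof (pow2_ge_0 c). lra. }
  assert (Hq0 : 0 < y ^ 2 + Rabs p ^ 2)
    by (pose proof (pow2_ge_0 y); assert (0 < Rabs p ^ 2) by (apply pow_lt; lra); lra).
  split; [|split; [|split]].
  - eapply Rle_trans; [exact b0 | apply Rdiv_le_Rdiv_l; lra].
  - eapply Rle_trans; [exact by' | apply Rdiv_le_Rdiv_l; simpl; lra].
  - eapply Rle_trans; [exact b1 | apply Rdiv_le_Rdiv_l; lra].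
  - eapply Rle_trans; [exact b2|]. unfold Rdiv. rewrite Rmult_assoc, <- Rinv_mult.
    apply Rmult_le_compat_l; [exact HK|].
    apply Rinv_le_contravar; [apply Rmult_lt_0_compat; lra|].
    apply Rmult_le_compat; lra.
Qed.

Lemma bound_g3_at_large_x x y s : 2 <= s -> s <= Rabs x ->
  Rabs (g3 x y c) <= K / (y ^ 2 + s ^ 2) / x ^ 2.
Proof.
  intros Hs Hx. pose proof (uniform_decay_K _ _ Hg) as HK.
  destruct (norm3_facts x y c) as [_ [Hn2 [Hxn _]]].
  pose proof (uniform_decay_bound_x _ _ Hg 3 x y c ltac:(lia) ltac:(lra)) as b3. simpl in b3.
  eapply Rle_trans; [exact b3|].
  assert (Hx2 : s ^ 2 <= x ^ 2) by (rewrite <- (pow2_abs x); apply pow_incr; lra).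
  pose proof (pow2_ge_0 y). pose proof (pow2_ge_0 c). assert (4 <= s ^ 2) by (simpl; nra).
  replace (norm3 x y c * (norm3 x y c * (norm3 x y c * (norm3 x y c * 1))))
    with (norm3 x y c ^ 2 * norm3 x y c ^ 2) by ring.
  rewrite Hn2. unfold Rdiv. rewrite Rmult_assoc, <- Rinv_mult.
  apply Rmult_le_compat_l; [exact HK|]. apply Rinv_le_contravar; [nra|].
  apply Rmult_le_compat; lra.
Qed.

Definition x_boundary (p y : R) : C :=
  ibp3_boundary (fun t => g t y c) (fun t => g1 t y c) (fun t => g2 t y c) k1 p.

Lemma RInt_slice_by_parts3 u v y :
  @RInt CV (modulated (fun t => g t y c) k1) u v =
  Cminus (Cminus (x_boundary v y) (x_boundary u y))
    (Cmult (ibp_factor3 k1) (@RInt CV (modulated (fun t => g3 t y c) k1) u v)).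
Proof.
  apply RInt_modulated_by_parts3; [exact Hk1 | intro x .. | intro x].
  - apply (is_derive_slice_x _ _ Hg nil).
  - apply (is_derive_slice_x _ _ Hg (dX :: nil)).
  - apply (is_derive_slice_x _ _ Hg (dX :: dX :: nil)).
  - apply (continuous_slice_x _ _ Hg (dX :: dX :: dX :: nil)).
Qed.

Definition beta : R :=
  a1 * ((2 * K + K * PI) / Rabs k2) + a1 ^ 2 * (K * PI) + a1 ^ 3 * (K * PI).

(* Integrating by parts in [y] is needed only for the [g] term, which decays like [1/|p|]
   uniformly in [y]; the other two terms are integrable in [y]. *)
Lemma boundary_y_integral p r : 2 <= Rabs p -> 0 <= r ->
  exists l, @is_RInt CV (fun y => Cmult (x_boundary p y) (wave k2 y)) (- r) r l /\
            Cmod l <= beta / Rabs p.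
Proof.
  intros Hp Hr. pose proof (uniform_decay_K _ _ Hg) as HK.
  pose proof PI_RGT_0. pose proof inv_Rabs_k1_pos.
  set (ck := ibp_factor k1). set (w := Cmult ck (wave k1 p)).
  set (l0 := sym_int (fun t => g p t c) k2 r).
  set (l1 := sym_int (fun t => g1 p t c) k2 r).
  set (l2 := sym_int (fun t => g2 p t c) k2 r).
  exists (Cplus (Cminus (Cmult w l0) (Cmult (Cmult ck w) l1)) (Cmult (Cmult ck (Cmult ck w)) l2)).
  split.
  - eapply is_RInt_ext; [|apply is_RInt_Cplus; [apply is_RInt_Cminus|]; apply is_RInt_Cmult_l;
      apply (@RInt_correct CV), ex_RInt_modulated; intro y;
      [apply (continuous_slice_y _ _ Hg nil) | apply (continuous_slice_y _ _ Hg (dX :: nil))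
      | apply (continuous_slice_y _ _ Hg (dX :: dX :: nil))]].
    intros y _. unfold x_boundary, ibp3_boundary, modulated, w, ck. Cring.
  - assert (Hck : Cmod ck = a1) by (apply Cmod_ibp_factor, Hk1).
    assert (Hw : Cmod w = a1) by (unfold w; rewrite Cmod_mult, Hck, Cmod_wave; ring).
    assert (B0 : Cmod l0 <= (2 * (K / Rabs p) + K * PI / Rabs p) / Rabs k2).
    { apply (Cmod_sym_int_le_by_parts _ (fun t => gy p t c)); try lra; try assumption.
      - intro y. apply (is_derive_slice_y _ _ Hg).
      - intro y. apply (continuous_slice_y _ _ Hg (dY :: nil)).
      - intro y. apply (bounds_at_large_x p y Hp).
      - intro y. apply (bounds_at_large_x p y Hp). }
    assert (B1 : Cmod l1 <= K * PI / Rabs p).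
    { apply Cmod_sym_int_le_Lorentz; try lra; [apply (continuous_slice_y _ _ Hg (dX :: nil))|].
      intro y. apply (bounds_at_large_x p y Hp). }
    assert (B2 : Cmod l2 <= K * PI / Rabs p).
    { eapply Rle_trans.
      - apply (Cmod_sym_int_le_Lorentz _ _ (Rabs p) (K / Rabs p)); try lra;
          [apply Rdiv_le_0_compat; lra | apply (continuous_slice_y _ _ Hg (dX :: dX :: nil))|].
        intro y. apply (bounds_at_large_x p y Hp).
      - replace (K / Rabs p * PI / Rabs p) with (K * PI / Rabs p * / Rabs p) by (field; lra).
        assert (/ Rabs p <= 1) by (rewrite <- Rinv_1; apply Rinv_le_contravar; lra).
        assert (0 <= K * PI / Rabs p) by (apply Rdiv_le_0_compat; nra). nra. }
    eapply Rle_trans; [apply Cmod_triangle|].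
    eapply Rle_trans; [apply Rplus_le_compat_r, Cmod_Cminus_le|].
    rewrite !Cmod_mult, Hck, Hw.
    apply Rle_trans with (a1 * ((2 * (K / Rabs p) + K * PI / Rabs p) / Rabs k2)
      + a1 ^ 2 * (K * PI / Rabs p) + a1 ^ 3 * (K * PI / Rabs p)).
    + repeat apply Rplus_le_compat; [apply Rmult_le_compat_l; lra | |];
        (replace (a1 * a1) with (a1 ^ 2) by ring || replace (a1 * (a1 * a1)) with (a1 ^ 3) by ring);
        apply Rmult_le_compat_l; try assumption; apply pow_le; lra.
    + right. unfold beta. field. repeat split; try lra; apply Rabs_no_R0; assumption.
Qed.

Lemma remainder_y_integral u v s r : 2 <= s -> (s <= u /\ s <= v) \/ (u <= - s /\ v <= - s) ->
  0 <= r ->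
  exists l, @is_RInt CV (fun y => Cmult (@RInt CV (modulated (fun t => g3 t y c) k1) u v) (wave k2 y))
              (- r) r l /\ Cmod l <= K / s * PI / s.
Proof.
  intros Hs Huv Hr. pose proof (uniform_decay_K _ _ Hg) as HK.
  set (T := fun y => @RInt CV (modulated (fun t => g3 t y c) k1) u v).
  assert (HT : forall y, Cmod (T y) <= K / (y ^ 2 + s ^ 2) / s).
  { intro y. pose proof (pos_sq_plus_sq y s ltac:(lra)).
    apply Cmod_RInt_le_inv_sq; [lra | apply Rdiv_le_0_compat; lra | exact Huv
      | apply ex_RInt_modulated, (continuous_slice_x _ _ Hg (dX :: dX :: dX :: nil))|].
    intros x Hx. rewrite Cmod_modulated. apply bound_g3_at_large_x; assumption. }
  assert (Hex : @ex_RInt CV (fun y => Cmult (T y) (wave k2 y)) (- r) r).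
  { apply ex_RInt_continuous. intros y _. apply continuous_Cmult; [|apply continuous_wave].
    apply (continuous_RInt_C_param (fun x y => Cmult (RtoC (g3 x y c)) (wave k1 x))).
    apply continuity_2d_C_modulated. intros.
    apply (continuity_2d_slice _ _ Hg (dX :: dX :: dX :: nil)). }
  exists (@RInt CV (fun y => Cmult (T y) (wave k2 y)) (- r) r).
  split; [apply (@RInt_correct CV), Hex|].
  apply Cmod_RInt_le_Lorentz; [lra | lra | apply Rdiv_le_0_compat; lra | exact Hex|].
  intros y _. rewrite Cmod_mult, Cmod_wave, Rmult_1_r. eapply Rle_trans; [apply HT|].
  pose proof (pos_sq_plus_sq y s ltac:(lra)). right. field. lra.
Qed.

Definition inner_int (s y : R) : C :=
  @RInt CV (fun a => Cmult (Cmult (RtoC (g a y c)) (wave k1 a)) (wave k2 y)) (- s) s.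

Lemma inner_int_eq s y : inner_int s y = Cmult (sym_int (fun t => g t y c) k1 s) (wave k2 y).
Proof.
  apply (@is_RInt_unique CV). apply (is_RInt_Cmult_r (modulated (fun t => g t y c) k1)).
  apply (@RInt_correct CV), ex_RInt_modulated, (continuous_slice_x _ _ Hg nil).
Qed.

Lemma ex_RInt_inner_int s a b : @ex_RInt CV (inner_int s) a b.
Proof.
  apply (ex_RInt_RInt_C_param (fun a b => Cmult (Cmult (RtoC (g a b c)) (wave k1 a)) (wave k2 b))).
  apply continuity_2d_C_modulated2. intros. apply (continuity_2d_slice _ _ Hg nil).
Qed.

Lemma inner_int_diff s s' y :
  Cminus (inner_int s' y) (inner_int s y) =
  Cmult (Cplus (Cminus (Cminus (x_boundary (- s) y) (x_boundary (- s') y))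
                  (Cmult (ibp_factor3 k1) (@RInt CV (modulated (fun t => g3 t y c) k1) (- s') (- s))))
               (Cminus (Cminus (x_boundary s' y) (x_boundary s y))
                  (Cmult (ibp_factor3 k1) (@RInt CV (modulated (fun t => g3 t y c) k1) s s'))))
        (wave k2 y).
Proof.
  assert (Hex : forall u v, @ex_RInt CV (modulated (fun t => g t y c) k1) u v)
    by (intros; apply ex_RInt_modulated, (continuous_slice_x _ _ Hg nil)).
  rewrite !inner_int_eq. unfold sym_int.
  rewrite <- (RInt_Chasles_C _ (- s') (- s) s'), <- (RInt_Chasles_C _ (- s) s s') by apply Hex.
  rewrite !RInt_slice_by_parts3. Cring.
Qed.

Definition tail_constant : R := 4 * beta + 2 * a1 ^ 3 * (K * PI).

Lemma beta_ge0 : 0 <= beta.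
Proof.
  pose proof (uniform_decay_K _ _ Hg). pose proof PI_RGT_0. pose proof inv_Rabs_k1_pos.
  pose proof (Rabs_pos_lt k2 Hk2).
  pose proof (pow_lt a1 2 inv_Rabs_k1_pos). pose proof (pow_lt a1 3 inv_Rabs_k1_pos).
  assert (0 <= K * PI) by nra. assert (0 <= (2 * K + K * PI) / Rabs k2) by (apply Rdiv_le_0_compat; lra).
  unfold beta. nra.
Qed.

Lemma tail_constant_ge0 : 0 <= tail_constant.
Proof.
  pose proof beta_ge0. pose proof (uniform_decay_K _ _ Hg). pose proof PI_RGT_0.
  pose proof (pow_lt a1 3 inv_Rabs_k1_pos). assert (0 <= K * PI) by nra.
  unfold tail_constant. nra.
Qed.

Lemma inner_int_cauchy s s' r : 2 <= s -> s <= s' -> 0 <= r ->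
  Cmod (Cminus (@RInt CV (inner_int s') (- r) r) (@RInt CV (inner_int s) (- r) r)) <= tail_constant / s.
Proof.
  intros Hs Hss Hr. pose proof beta_ge0. pose proof (uniform_decay_K _ _ Hg). pose proof PI_RGT_0.
  assert (Hq : forall p, s <= Rabs p -> exists q,
            @is_RInt CV (fun y => Cmult (x_boundary p y) (wave k2 y)) (- r) r q /\ Cmod q <= beta / s).
  { intros p Hp. destruct (boundary_y_integral p r ltac:(lra) Hr) as [q [Hq Bq]].
    exists q. split; [exact Hq|]. eapply Rle_trans; [exact Bq | apply Rdiv_le_Rdiv_l; lra]. }
  destruct (Hq s') as [q1 [Hq1 Bq1]]; [rewrite Rabs_right; lra|].
  destruct (Hq s) as [q2 [Hq2 Bq2]]; [rewrite Rabs_right; lra|].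
  destruct (Hq (- s)) as [q3 [Hq3 Bq3]]; [rewrite Rabs_left; lra|].
  destruct (Hq (- s')) as [q4 [Hq4 Bq4]]; [rewrite Rabs_left; lra|].
  destruct (remainder_y_integral (- s') (- s) s r) as [t1 [Ht1 Bt1]]; [lra | lra | lra|].
  destruct (remainder_y_integral s s' s r) as [t2 [Ht2 Bt2]]; [lra | lra | lra|].
  assert (HV : @is_RInt CV (fun y => Cminus (inner_int s' y) (inner_int s y)) (- r) r
     (Cplus (Cminus (Cminus q3 q4) (Cmult (ibp_factor3 k1) t1))
            (Cminus (Cminus q1 q2) (Cmult (ibp_factor3 k1) t2)))).
  { eapply is_RInt_ext; [|apply is_RInt_Cplus; (apply is_RInt_Cminus;
      [apply is_RInt_Cminus | apply is_RInt_Cmult_l]); eassumption].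
    intros y _. rewrite inner_int_diff. Cring. }
  rewrite <- (is_RInt_unique _ _ _ _ (is_RInt_Cminus _ _ _ _ _ _
    (RInt_correct _ _ _ (ex_RInt_inner_int s' _ _)) (RInt_correct _ _ _ (ex_RInt_inner_int s _ _)))).
  rewrite (is_RInt_unique _ _ _ _ HV).
  assert (Bt : forall t, Cmod t <= K / s * PI / s ->
                 Cmod (Cmult (ibp_factor3 k1) t) <= a1 ^ 3 * (K * PI / s)).
  { intros t Bt. rewrite Cmod_mult, Cmod_ibp_factor3 by exact Hk1.
    apply Rmult_le_compat_l; [apply pow_le, Rlt_le, inv_Rabs_k1_pos|]. eapply Rle_trans; [exact Bt|].
    replace (K / s * PI / s) with (K * PI / s * / s) by (field; lra).
    assert (/ s <= 1) by (rewrite <- Rinv_1; apply Rinv_le_contravar; lra).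
    assert (0 <= K * PI / s) by (apply Rdiv_le_0_compat; nra). nra. }
  apply Bt in Bt1. apply Bt in Bt2.
  pose proof (Cmod_Cminus_le (Cminus q3 q4) (Cmult (ibp_factor3 k1) t1)).
  pose proof (Cmod_Cminus_le (Cminus q1 q2) (Cmult (ibp_factor3 k1) t2)).
  pose proof (Cmod_Cminus_le q3 q4). pose proof (Cmod_Cminus_le q1 q2).
  eapply Rle_trans; [apply Cmod_triangle|].
  apply Rle_trans with (4 * (beta / s) + 2 * (a1 ^ 3 * (K * PI / s))); [lra|].
  pose proof (Rabs_pos_lt k1 Hk1). right. unfold tail_constant. field. split; lra.
Qed.

End DoubleTransform.

Lemma filterlim_prod_of_uniform_approx (u : R -> R -> C) (U : R -> C) (l : C) (C0 s0 : R) :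
  0 < s0 -> 0 <= C0 -> filterlim U (Rbar_locally p_infty) (@locally CV l) ->
  (forall r s, 0 <= r -> s0 <= s -> Cmod (Cminus (U r) (u r s)) <= C0 / s) ->
  filterlim (fun rs : R * R => u (fst rs) (snd rs))
    (filter_prod (Rbar_locally p_infty) (Rbar_locally p_infty)) (@locally CV l).
Proof.
  intros Hs0 HC0 HU Happrox. apply (proj2 (filterlim_locally_Cmod _ _ l)). intro eps.
  pose proof (cond_pos eps).
  assert (He2 : 0 < eps / 2) by lra.
  destruct (proj1 (filterlim_locally_Cmod _ U l) HU (mkposreal _ He2)) as [M HM]. simpl in HM.
  assert (Hq : 0 <= 2 * C0 / eps) by (apply Rdiv_le_0_compat; lra).
  apply (Filter_prod _ _ _ (fun r => Rmax M 0 < r) (fun s => s0 + 2 * C0 / eps < s));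
    [exists (Rmax M 0); auto | exists (s0 + 2 * C0 / eps); auto|].
  intros r s Hr Hs. simpl. pose proof (Rmax_l M 0). pose proof (Rmax_r M 0).
  assert (Hs' : C0 / s <= eps / 2).
  { apply (Rmult_le_reg_r s); [lra|]. replace (C0 / s * s) with C0 by (field; lra).
    replace (2 * C0 / eps) with (C0 / (eps / 2)) in Hs by (field; lra).
    assert (C0 / (eps / 2) * (eps / 2) <= s * (eps / 2)) by (apply Rmult_le_compat_r; lra).
    replace (C0 / (eps / 2) * (eps / 2)) with C0 in * by (field; lra). lra. }
  replace (Cminus (u r s) l) with (Cplus (Copp (Cminus (U r) (u r s))) (Cminus (U r) l)) by ring.
  eapply Rle_lt_trans; [apply Cmod_triangle|]. rewrite Cmod_opp.
  pose proof (Happrox r s ltac:(lra) ltac:(lra)). pose proof (HM r ltac:(lra)). lra.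
Qed.

Section DoubleLimit.
Variables (g : R -> R -> R -> R) (K k1 k2 c : R).
Hypothesis Hg : uniform_decay g K.
Hypotheses (Hk1 : k1 <> 0) (Hk2 : k2 <> 0).
Variable A : R -> C.
Hypothesis HA : forall y, sym_lim (modulated (fun t => g t y c) k1) (A y).

Lemma inner_int_unif_approx s y : 2 <= s ->
  Cmod (Cminus (inner_int g k1 k2 c s y) (Cmult (A y) (wave k2 y))) <= 6 * K / (Rabs k1 * s).
Proof.
  intro Hs. rewrite (inner_int_eq g K k1 k2 c Hg).
  replace (Cminus (Cmult (sym_int (fun t => g t y c) k1 s) (wave k2 y)) (Cmult (A y) (wave k2 y)))
    with (Cmult (Cminus (sym_int (fun t => g t y c) k1 s) (A y)) (wave k2 y)) by ring.
  rewrite Cmod_mult, Cmod_wave, Rmult_1_r, Cmod_Cminus_sym.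
  exact (sym_lim_modulated_rate _ _ _ _ _ (slow_decay_slice g K Hg y c) Hk1 (A y) (HA y) s Hs).
Qed.

Lemma RInt_inner_int_lim a b : exists I,
  filterlim (fun s => @RInt CV (inner_int g k1 k2 c s) a b) (Rbar_locally p_infty) (@locally CV I) /\
  @is_RInt CV (fun y => Cmult (A y) (wave k2 y)) a b I.
Proof.
  apply (@filterlim_RInt R CV (inner_int g k1 k2 c) a b (Rbar_locally p_infty) (Rbar_locally_filter _)).
  - intro s. apply (@RInt_correct CV), (ex_RInt_inner_int _ _ _ _ _ Hg).
  - apply filterlim_locally. intro eps. pose proof (cond_pos eps) as He.
    pose proof (uniform_decay_K _ _ Hg) as HK. pose proof (Rabs_pos_lt k1 Hk1).
    assert (Hq : 0 <= 6 * K / Rabs k1 / eps)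
      by (apply Rdiv_le_0_compat; [apply Rdiv_le_0_compat|]; lra).
    exists (2 + 6 * K / Rabs k1 / eps). intros s Hs y.
    apply (@norm_compat1 R_AbsRing CV). rewrite norm_CV, minus_CV.
    eapply Rle_lt_trans; [apply inner_int_unif_approx; lra|].
    replace (6 * K / (Rabs k1 * s)) with (6 * K / Rabs k1 / s) by (field; lra).
    apply Rdiv_lt_of_Rdiv_lt; [apply Rdiv_le_0_compat | | |]; lra.
Qed.

Lemma ex_RInt_A a b : @ex_RInt CV (fun y => Cmult (A y) (wave k2 y)) a b.
Proof. destruct (RInt_inner_int_lim a b) as [I [_ H]]. exists I. exact H. Qed.

Lemma RInt_A_approx r s : 0 <= r -> 2 <= s ->
  Cmod (Cminus (@RInt CV (fun y => Cmult (A y) (wave k2 y)) (- r) r)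
               (@RInt CV (inner_int g k1 k2 c s) (- r) r)) <= tail_constant K k1 k2 / s.
Proof.
  intros Hr Hs. destruct (RInt_inner_int_lim (- r) r) as [I [HI HIA]].
  rewrite (is_RInt_unique _ _ _ _ HIA).
  apply (Cmod_lim_le (Rbar_locally p_infty) (fun s' => @RInt CV (inner_int g k1 k2 c s') (- r) r));
    [exact HI|].
  exists s. intros s' Hs'. apply (inner_int_cauchy _ _ _ _ _ Hg Hk1 Hk2); lra.
Qed.

Lemma Cmod_A_le y : 1 < norm2 y c -> Cmod (A y) <= K * PI / (Rabs k1 ^ 3 * norm2 y c ^ 3).
Proof. intro Hn. exact (Cmod_sym_lim_slice_le _ _ Hg k1 y c (A y) Hk1 Hn (HA y)). Qed.

Lemma inv_sq_decay_A : inv_sq_decay (fun y => Cmult (A y) (wave k2 y)) 2 (K * PI / Rabs k1 ^ 3).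
Proof.
  pose proof (uniform_decay_K _ _ Hg) as HK. pose proof PI_RGT_0.
  assert (Hk3 : 0 < Rabs k1 ^ 3) by (apply pow_lt, Rabs_pos_lt, Hk1).
  split; [lra|]. split; [apply Rdiv_le_0_compat; nra|]. split; [apply ex_RInt_A|].
  intros y Hy. rewrite Cmod_mult, Cmod_wave, Rmult_1_r.
  destruct (norm2_facts y c) as [_ [_ [Hyn _]]].
  eapply Rle_trans; [apply Cmod_A_le; lra|].
  assert (Hy3 : y ^ 2 <= norm2 y c ^ 3).
  { rewrite <- (pow2_abs y). pose proof (pow2_ge_0 (Rabs y)).
    replace (norm2 y c ^ 3) with (norm2 y c * norm2 y c ^ 2) by ring.
    assert (Rabs y ^ 2 <= norm2 y c ^ 2) by (apply pow_incr; split; [apply Rabs_pos | exact Hyn]).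
    nra. }
  assert (0 < y ^ 2) by (rewrite <- (pow2_abs y); apply pow_lt; lra).
  replace (K * PI / (Rabs k1 ^ 3 * norm2 y c ^ 3)) with (K * PI / Rabs k1 ^ 3 / norm2 y c ^ 3)
    by (pose proof (Rabs_pos_lt k1 Hk1); field; split; lra).
  apply Rdiv_le_Rdiv_l; [apply Rdiv_le_0_compat; nra | lra | exact Hy3].
Qed.

Lemma Cmod_RInt_A_le r : 1 < Rabs c -> 0 <= r ->
  Cmod (@RInt CV (fun y => Cmult (A y) (wave k2 y)) (- r) r) <= K * PI ^ 2 / Rabs k1 ^ 3 / c ^ 2.
Proof.
  intros Hc Hr. pose proof (uniform_decay_K _ _ Hg) as HK. pose proof PI_RGT_0.
  assert (Hk3 : 0 < Rabs k1 ^ 3) by (apply pow_lt, Rabs_pos_lt, Hk1).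
  eapply Rle_trans.
  - apply (Cmod_RInt_le_Lorentz _ _ _ (Rabs c) (K * PI / (Rabs k1 ^ 3 * Rabs c)));
      [lra | lra | apply Rdiv_le_0_compat; [nra | apply Rmult_lt_0_compat; lra] | apply ex_RInt_A|].
    intros y _. rewrite Cmod_mult, Cmod_wave, Rmult_1_r.
    destruct (norm2_facts y c) as [Hn0 [Hn2 [_ Hcn]]].
    eapply Rle_trans; [apply Cmod_A_le; lra|].
    assert (Hq : Rabs c * (y ^ 2 + Rabs c ^ 2) <= norm2 y c ^ 3).
    { replace (norm2 y c ^ 3) with (norm2 y c * norm2 y c ^ 2) by ring. rewrite Hn2, pow2_abs.
      apply Rmult_le_compat_r; [pose proof (pow2_ge_0 y); pose proof (pow2_ge_0 c); lra | exact Hcn]. }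
    pose proof (pos_sq_plus_sq y (Rabs c) ltac:(lra)).
    replace (K * PI / (Rabs k1 ^ 3 * Rabs c) / (y ^ 2 + Rabs c ^ 2))
      with (K * PI / (Rabs k1 ^ 3 * (Rabs c * (y ^ 2 + Rabs c ^ 2))))
      by (pose proof (Rabs_pos_lt k1 Hk1); field; repeat split; lra).
    apply Rdiv_le_Rdiv_l; [nra | apply Rmult_lt_0_compat; [lra | apply Rmult_lt_0_compat; lra] |].
    apply Rmult_le_compat_l; lra.
  - pose proof (Rabs_pos_lt k1 Hk1). rewrite <- (pow2_abs c). right. field. split; lra.
Qed.

Lemma double_limit : exists F0,
  sym_lim2 (fun a b => Cmult (Cmult (RtoC (g a b c)) (wave k1 a)) (wave k2 b)) F0 /\
  improper_int (fun y => Cmult (A y) (wave k2 y)) F0 /\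
  (1 < Rabs c -> Cmod F0 <= K * PI ^ 2 / Rabs k1 ^ 3 / c ^ 2).
Proof.
  destruct (improper_int_of_inv_sq_decay _ _ _ inv_sq_decay_A) as [F0 [HS HI]].
  exists F0. split; [|split; [exact HI|]].
  - apply (filterlim_prod_of_uniform_approx (fun r s => @RInt CV (inner_int g k1 k2 c s) (- r) r)
      (fun r => @RInt CV (fun y => Cmult (A y) (wave k2 y)) (- r) r) F0
      (tail_constant K k1 k2) 2); [lra | | exact HS|].
    + apply (tail_constant_ge0 _ _ _ _ Hg Hk1 Hk2).
    + intros r s Hr Hs. apply RInt_A_approx; assumption.
  - intro Hc. assert (Hz : forall z : C, Cminus z (RtoC 0) = z) by (intro; ring).
    rewrite <- (Hz F0).
    apply (Cmod_lim_le (Rbar_locally p_infty)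
      (fun r => @RInt CV (fun y => Cmult (A y) (wave k2 y)) (- r) r));
      [exact HS|].
    exists 0. intros r Hr. rewrite Hz. apply Cmod_RInt_A_le; lra.
Qed.

End DoubleLimit.

Definition sym_limit (h : R -> C) : C := epsilon (inhabits (RtoC 0)) (sym_lim h).

Definition sym_limit2 (h : R -> R -> C) : C := epsilon (inhabits (RtoC 0)) (sym_lim2 h).

Lemma sym_limit_spec h l : sym_lim h l -> sym_lim h (sym_limit h).
Proof. intro H. unfold sym_limit, sym_limit2. apply epsilon_spec. exists l. exact H. Qed.

Lemma sym_limit2_spec h l : sym_lim2 h l -> sym_lim2 h (sym_limit2 h).
Proof. intro H. unfold sym_limit, sym_limit2. apply epsilon_spec. exists l. exact H. Qed.

Lemma sym_lim2_unique h l1 l2 : sym_lim2 h l1 -> sym_lim2 h l2 -> l1 = l2.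
Proof.
  apply (@filterlim_locally_unique (R * R) R_AbsRing CV
    (filter_prod (Rbar_locally p_infty) (Rbar_locally p_infty)) _).
Qed.

Lemma sym_lim2_swap (H H' : R -> R -> C) (l l' : C) : continuity_2d_C H ->
  (forall a b, H' a b = H b a) -> sym_lim2 H l -> sym_lim2 H' l' -> l = l'.
Proof.
  intros Hc Heq H1 H2. apply (sym_lim2_unique H'); [|exact H2].
  eapply filterlim_ext.
  2: { apply (filterlim_comp _ _ _ (fun rs : R * R => (snd rs, fst rs))
          (fun rs : R * R => @RInt CV (fun b => @RInt CV (fun a => H a b) (- snd rs) (snd rs))
                                (- fst rs) (fst rs)) _
          (filter_prod (Rbar_locally p_infty) (Rbar_locally p_infty))); [|exact H1].
       apply filterlim_pair; [apply filterlim_snd | apply filterlim_fst]. }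
  intros [r s]. simpl. rewrite (RInt_RInt_C_swap H Hc (- r) r (- s) s).
  apply (@RInt_ext CV). intros x _. apply (@RInt_ext CV). intros y _. symmetry. apply Heq.
Qed.

Lemma sym_limit_slice g K k b c : uniform_decay g K -> k <> 0 ->
  sym_lim (modulated (fun a => g a b c) k) (sym_limit (modulated (fun a => g a b c) k)).
Proof.
  intros Hg Hk. destruct (ex_sym_lim_modulated _ _ _ _ _ (slow_decay_slice g K Hg b c) Hk) as [l Hl].
  exact (sym_limit_spec _ _ Hl).
Qed.

Lemma fourier_slice g : pure_decay3 g -> forall k, k <> 0 ->
  (forall b c, sym_lim (modulated (fun a => g a b c) k) (sym_limit (modulated (fun a => g a b c) k))) /\
  moderate_decreaseC2 3 (fun b c => sym_limit (modulated (fun a => g a b c) k)).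
Proof.
  intros Hg k Hk. destruct (uniform_decay_of_pure_decay3 g Hg) as [K HK].
  split; [intros b c; exact (sym_limit_slice g K k b c HK Hk)|].
  exists (K * PI / Rabs k ^ 3). intros b c Hn.
  eapply Rle_trans;
    [exact (Cmod_sym_lim_slice_le g K HK k b c _ Hk Hn (sym_limit_slice g K k b c HK Hk))|].
  pose proof (Rabs_pos_lt k Hk). right. field. split; lra.
Qed.

Definition twice_modulated (g : R -> R -> R -> R) (k1 k2 c a b : R) : C :=
  Cmult (Cmult (RtoC (g a b c)) (wave k1 a)) (wave k2 b).

(* Fubini on rectangles identifies the double limits taken in the two orders of integration. *)
Lemma double_transform g K K' k1 k2 c : uniform_decay g K -> uniform_decay (permute swap12 g) K' ->
  k1 <> 0 -> k2 <> 0 ->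
  sym_lim2 (twice_modulated g k1 k2 c) (sym_limit2 (twice_modulated g k1 k2 c)) /\
  improper_int (fun b => Cmult (sym_limit (modulated (fun a => g a b c) k1)) (wave k2 b))
    (sym_limit2 (twice_modulated g k1 k2 c)) /\
  improper_int (fun a => Cmult (sym_limit (modulated (fun b => g a b c) k2)) (wave k1 a))
    (sym_limit2 (twice_modulated g k1 k2 c)) /\
  (1 < Rabs c -> Cmod (sym_limit2 (twice_modulated g k1 k2 c)) <= K * PI ^ 2 / Rabs k1 ^ 3 / c ^ 2).
Proof.
  intros Hg Hg' Hk1 Hk2.
  destruct (double_limit g K k1 k2 c Hg Hk1 Hk2 _ (fun b => sym_limit_slice g K k1 b c Hg Hk1))
    as [F [HF [HIF HBF]]].
  change (sym_lim2 (twice_modulated g k1 k2 c) F) in HF.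
  destruct (double_limit _ K' k2 k1 c Hg' Hk2 Hk1 _
    (fun a => sym_limit_slice (permute swap12 g) K' k2 a c Hg' Hk2)) as [F' [HF' [HIF' _]]].
  assert (HFF' : F = F').
  { apply (sym_lim2_swap (twice_modulated g k1 k2 c) (twice_modulated (permute swap12 g) k2 k1 c)
      _ _ (continuity_2d_C_modulated2 (fun a b => g a b c) k1 k2
      (fun a b => continuity_2d_slice g K Hg nil c a b))); [|exact HF | exact HF'].
    intros a b. unfold twice_modulated, permute, app3. simpl. ring. }
  rewrite <- (sym_lim2_unique _ _ _ HF (sym_limit2_spec _ _ HF)).
  split; [exact HF|]. split; [exact HIF|]. split; [rewrite HFF'; exact HIF' | exact HBF].
Qed.

Lemma fourier_pair g : pure_decay3 g -> forall k1 k2, k1 <> 0 -> k2 <> 0 ->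
  (forall c, sym_lim2 (twice_modulated g k1 k2 c) (sym_limit2 (twice_modulated g k1 k2 c))) /\
  moderate_decreaseC1 (fun c => sym_limit2 (twice_modulated g k1 k2 c)) /\
  (forall c, improper_int (fun b => Cmult (sym_limit (modulated (fun a => g a b c) k1)) (wave k2 b))
               (sym_limit2 (twice_modulated g k1 k2 c))) /\
  (forall c, improper_int (fun a => Cmult (sym_limit (modulated (fun b => g a b c) k2)) (wave k1 a))
               (sym_limit2 (twice_modulated g k1 k2 c))).
Proof.
  intros Hg k1 k2 Hk1 Hk2.
  destruct (uniform_decay_of_pure_decay3 g Hg) as [K HK].
  destruct (uniform_decay_of_pure_decay3 _ (pure_decay3_swap12 g Hg)) as [K' HK'].
  pose proof (fun c => double_transform g K K' k1 k2 c HK HK' Hk1 Hk2) as D.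
  split; [intro c; exact (proj1 (D c))|].
  split; [exists (K * PI ^ 2 / Rabs k1 ^ 3); intros c Hc; exact (proj2 (proj2 (proj2 (D c))) Hc)|].
  split; intro c; [exact (proj1 (proj2 (D c))) | exact (proj1 (proj2 (proj2 (D c))))].
Qed.

Theorem lemma16 (f : R -> R -> R -> R) (Hf : normal3 f) :
  exists A B Cc F G H : R -> R -> R -> C,
  forall k1 k2 k3 : R, k1 <> 0 -> k2 <> 0 -> k3 <> 0 ->
  (* (a) *)
  (forall y z, sym_lim (fun x => Cmult (RtoC (f x y z)) (cexpi (- (k1 * x)))) (A k1 y z)) /\
  (forall x z, sym_lim (fun y => Cmult (RtoC (f x y z)) (cexpi (- (k2 * y)))) (B x k2 z)) /\
  (forall x y, sym_lim (fun z => Cmult (RtoC (f x y z)) (cexpi (- (k3 * z)))) (Cc x y k3)) /\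
  moderate_decreaseC2 3 (fun y z => A k1 y z) /\
  moderate_decreaseC2 3 (fun x z => B x k2 z) /\
  moderate_decreaseC2 3 (fun x y => Cc x y k3) /\
  (* (b) *)
  (forall z, sym_lim2 (fun x y =>
     Cmult (Cmult (RtoC (f x y z)) (cexpi (- (k1 * x)))) (cexpi (- (k2 * y)))) (F k1 k2 z)) /\
  (forall y, sym_lim2 (fun x z =>
     Cmult (Cmult (RtoC (f x y z)) (cexpi (- (k1 * x)))) (cexpi (- (k3 * z)))) (G k1 y k3)) /\
  (forall x, sym_lim2 (fun y z =>
     Cmult (Cmult (RtoC (f x y z)) (cexpi (- (k2 * y)))) (cexpi (- (k3 * z)))) (H x k2 k3)) /\
  moderate_decreaseC1 (fun z => F k1 k2 z) /\
  moderate_decreaseC1 (fun y => G k1 y k3) /\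
  moderate_decreaseC1 (fun x => H x k2 k3) /\
  (* (c) *)
  (forall z, improper_int (fun y => Cmult (A k1 y z) (cexpi (- (k2 * y)))) (F k1 k2 z)) /\
  (forall z, improper_int (fun x => Cmult (B x k2 z) (cexpi (- (k1 * x)))) (F k1 k2 z)) /\
  (forall y, improper_int (fun z => Cmult (A k1 y z) (cexpi (- (k3 * z)))) (G k1 y k3)) /\
  (forall y, improper_int (fun x => Cmult (Cc x y k3) (cexpi (- (k1 * x)))) (G k1 y k3)) /\
  (forall x, improper_int (fun z => Cmult (B x k2 z) (cexpi (- (k3 * z)))) (H x k2 k3)) /\
  (forall x, improper_int (fun y => Cmult (Cc x y k3) (cexpi (- (k2 * y)))) (H x k2 k3)).
Proof.
  pose proof (pure_decay3_of_normal3 f Hf) as Hxyz.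
  pose proof (pure_decay3_swap12 _ Hxyz) as Hyxz.
  pose proof (pure_decay3_swap23 _ Hxyz) as Hxzy.
  pose proof (pure_decay3_swap12 _ Hxzy) as Hyzx.
  pose proof (pure_decay3_swap23 _ Hyxz) as Hzxy.
  exists (fun k y z => sym_limit (modulated (fun x => f x y z) k)),
    (fun x k z => sym_limit (modulated (fun y => f x y z) k)),
    (fun x y k => sym_limit (modulated (fun z => f x y z) k)),
    (fun k1 k2 z => sym_limit2 (twice_modulated f k1 k2 z)),
    (fun k1 y k3 => sym_limit2 (twice_modulated (permute swap23 f) k1 k3 y)),
    (fun x k2 k3 => sym_limit2 (twice_modulated (permute swap23 (permute swap12 f)) k2 k3 x)).
  intros k1 k2 k3 Hk1 Hk2 Hk3.
  destruct (fourier_slice _ Hxyz k1 Hk1) as [SA MA].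
  destruct (fourier_slice _ Hyxz k2 Hk2) as [SB MB].
  destruct (fourier_slice _ Hyzx k3 Hk3) as [SC MC].
  destruct (fourier_pair _ Hxyz k1 k2 Hk1 Hk2) as [SF [MF [IF1 IF2]]].
  destruct (fourier_pair _ Hxzy k1 k3 Hk1 Hk3) as [SG [MG [IG1 IG2]]].
  destruct (fourier_pair _ Hzxy k2 k3 Hk2 Hk3) as [SH [MH [IH1 IH2]]].
  exact (conj SA (conj SB (conj SC (conj MA (conj MB (conj MC
    (conj SF (conj SG (conj SH (conj MF (conj MG (conj MH
    (conj IF1 (conj IF2 (conj IG1 (conj IG2 (conj IH1 IH2))))))))))))))))).
Qed.
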